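(* Let $\mathbb A$ be an abelian category with enough projective objects. Then the 2-category $\mathbb A^{[1]}_c$ is a 2-abelian $\mathsf{Gpd}$-category (in the sense of M. Dupont). Moreover: (a) the category of discrete objects of $\mathbb A^{[1]}_c$ (objects: discrete objects; morphisms: 2-isomorphism classes of morphisms) is equivalent to $\mathbb A$, via $a\mapsto \mathrm{Coker}(a)$; (b) the category of codiscrete objects of $\mathbb A^{[1]}_c$ (objects: codiscrete objects; morphisms: 2-isomorphism classes of morphisms) is equivalent to $\mathbb A$, via $a\mapsto \mathrm{Ker}(a)$.
   Context: Let $\mathbb A$ be an abelian category. The 2-category $\mathbb A^{[1]}$ has as objects the morphisms $a:A_1\to A_0$ of $\mathbb A$. For objects $a:A_1\to A_0$ and $b:B_1\to B_0$, a morphism $a\to b$ is a pair $(f_0,f_1)$ of morphisms $f_i:A_i\to B_i$ of $\mathbb A$ with $b f_1=f_0 a$; composition is componentwise. A 2-arrow $(f_0,f_1)\Rightarrow(g_0,g_1)$ between morphisms $a\to b$ is a morphism $\alpha:A_0\to B_1$ of $\mathbb A$ with $f_1-g_1=\alpha a$ and $f_0-g_0=b\alpha$; vertical composition is addition of such $\alpha$'s, and whiskering is given by $(h_0,h_1)\circ\alpha=h_1\alpha$ and $\alpha\circ(e_0,e_1)=\alpha e_0$. All 2-arrows are invertible, so each $\mathbf{Hom}(a,b)$ is a groupoid; the zero object is $0\to 0$. $\mathbb A^{[1]}_c$ is the full 2-subcategory of $\mathbb A^{[1]}$ on the objects $a:A_1\to A_0$ with $A_0$ projective in $\mathbb A$.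 In a 2-category $\mathcal C$ with invertible 2-arrows (a $\mathsf{Gpd}$-category) and zero object: a morphism $f:a\to b$ is faithful (resp. fully faithful) if for every object $x$ the functor $f\circ-:\mathbf{Hom}(x,a)\to\mathbf{Hom}(x,b)$ is faithful (resp. full and faithful); it is cofaithful (resp. fully cofaithful) if for every $x$ the functor $-\circ f:\mathbf{Hom}(b,x)\to\mathbf{Hom}(a,x)$ is faithful (resp. full and faithful). An object $a$ is discrete if $a\to 0$ is faithful and codiscrete if $0\to a$ is cofaithful. A 2-kernel of $f:a\to b$ is a triple $(k,u:k\to a,\kappa:fu\Rightarrow 0)$ such that for every $x$ the functor $v\mapsto (uv,\kappa v)$ from $\mathbf{Hom}(x,k)$ to the groupoid of pairs $(w\in\mathbf{Hom}(x,a),\ \phi:fw\Rightarrow 0)$ is an equivalence; a 2-cokernel is defined dually. A pip of $f:a\to b$ is a universal pair $(p,\pi)$ with $\pi:0\Rightarrow 0$ a 2-arrow between zero morphisms $p\to a$ and $f\pi=\mathrm{id}$; a root of a 2-arrow $\alpha:0\Rightarrow0$ between morphisms $a\to b$ is a universal morphism $r:R\to a$ with $\alpha r=\mathrm{id}$; copips and coroots are dual. Following Dupont, a $\mathsf{Gpd}$-category is 2-abelian if it is 2-additive (hom-groupoids are symmetric 2-groups, composition is bilinear, finite biproducts exist), it has all 2-kernels, 2-cokernels, pips, copips, roots and coroots, and it is 2-Puppe-exact: every faithful morphism is the 2-kernel of its 2-cokernel, every cofaithful morphism is the 2-cokernel of its 2-kernel, every fully faithful morphism is the root of its copip, and every fully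 cofaithful morphism is the coroot of its pip. *)

From HB Require Import structures.
From mathcomp Require Import all_boot all_algebra.
Set Implicit Arguments. Unset Strict Implicit. Unset Printing Implicit Defensive.
Import GRing.Theory.
Local Open Scope ring_scope.

Record PreAdditive := {
  ob :> Type;
  hom : ob -> ob -> zmodType;
  comp : forall a b c, hom b c -> hom a b -> hom a c;
  idm : forall a, hom a a;
  compA : forall a b c d (h : hom c d) (g : hom b c) (f : hom a b),
      comp h (comp g f) = comp (comp h g) f;
  comp1m : forall a b (f : hom a b), comp (idm b) f = f;
  compm1 : forall a b (f : hom a b), comp f (idm a) = f;
  compDl : forall a b c (g g' : hom b c) (f : hom a b),
      comp (g + g') f = comp g f + comp g' f;
  compDr : forall a b c (g : hom b c) (f f' : hom a b),
      comp g (f + f') = comp g f + comp g f';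
  zo : ob;
  zo_init : forall x (f : hom zo x), f = 0;
  zo_term : forall x (f : hom x zo), f = 0 }.

Arguments hom {_}.
Arguments comp {_ a b c}.
Arguments idm {_}.
Arguments zo {_}.

Section Abelian.
Variable A : PreAdditive.

Definition mono (x y : A) (m : hom x y) :=
  forall (t : A) (g h : hom t x), comp m g = comp m h -> g = h.
Definition epi (x y : A) (e : hom x y) :=
  forall (t : A) (g h : hom y t), comp g e = comp h e -> g = h.

Definition is_kernel (x y : A) (f : hom x y) (K : A) (k : hom K x) :=
  comp f k = 0 /\
  forall (t : A) (g : hom t x), comp f g = 0 -> exists! h : hom t K, comp k h = g.
Definition is_cokernel (x y : A) (f : hom x y) (C : A) (c : hom y C) :=
  comp c f = 0 /\
  forall (t : A) (g : hom y t), comp g f = 0 -> exists! h : hom C t, comp h c = g.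

Definition is_biproduct (x y w : A) (p1 : hom w x) (p2 : hom w y)
    (i1 : hom x w) (i2 : hom y w) :=
  [/\ comp p1 i1 = idm x, comp p2 i2 = idm y, comp p1 i2 = 0, comp p2 i1 = 0
    & comp i1 p1 + comp i2 p2 = idm w].

Definition abelian :=
  [/\ (forall x y : A, exists w p1 p2 i1 i2, @is_biproduct x y w p1 p2 i1 i2),
      (forall (x y : A) (f : hom x y), exists K (k : hom K x), is_kernel f k),
      (forall (x y : A) (f : hom x y), exists C (c : hom y C), is_cokernel f c),
      (forall (x y : A) (m : hom x y), mono m ->
          exists (z : A) (g : hom y z), is_kernel g m)
    & (forall (x y : A) (e : hom x y), epi e ->
          exists (z : A) (g : hom z x), is_cokernel g e)].

Definition projective (P : A) :=
  forall (x y : A) (e : hom x y), epi e ->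
  forall g : hom P y, exists h : hom P x, comp e h = g.

Definition enough_projectives :=
  forall x : A, exists (P : A) (e : hom P x), projective P /\ epi e.

Lemma comp0m (x y z : A) (f : hom x y) : comp (0 : hom y z) f = 0.
Proof.
have H : comp (0 : hom y z) f + comp 0 f = comp 0 f + 0.
  by rewrite -compDl !addr0.
exact: addrI H.
Qed.

Lemma compm0 (x y z : A) (g : hom y z) : comp g (0 : hom x y) = 0.
Proof.
have H : comp g (0 : hom x y) + comp g 0 = comp g 0 + 0.
  by rewrite -compDr !addr0.
exact: addrI H.
Qed.

Record arr := Arr { A1 : A; A0 : A; amap : hom A1 A0 }.

Definition inC (a : arr) := projective (A0 a).

Record mor (a b : arr) := Mor {
  m0 : hom (A0 a) (A0 b);
  m1 : hom (A1 a) (A1 b);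
  mcomm : comp (amap b) m1 = comp m0 (amap a) }.

Definition is2cell (a b : arr) (f g : mor a b) (al : hom (A0 a) (A1 b)) :=
  m1 f - m1 g = comp al (amap a) /\ m0 f - m0 g = comp (amap b) al.

Lemma compM_subproof (a b c : arr) (g : mor b c) (f : mor a b) :
  comp (amap c) (comp (m1 g) (m1 f)) = comp (comp (m0 g) (m0 f)) (amap a).
Proof. by rewrite compA mcomm -compA mcomm compA. Qed.

Definition compM (a b c : arr) (g : mor b c) (f : mor a b) : mor a c :=
  Mor (compM_subproof g f).

Lemma idM_subproof (a : arr) : comp (amap a) (idm (A1 a)) = comp (idm (A0 a)) (amap a).
Proof. by rewrite comp1m compm1. Qed.
Definition idM (a : arr) : mor a a := Mor (idM_subproof a).

Lemma zeroM_subproof (a b : arr) :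
  comp (amap b) (0 : hom (A1 a) (A1 b)) = comp (0 : hom (A0 a) (A0 b)) (amap a).
Proof. by rewrite comp0m compm0. Qed.
Definition zeroM (a b : arr) : mor a b := Mor (zeroM_subproof a b).

Definition Z : arr := Arr (0 : hom (@zo A) zo).

Definition faithfulM (a b : arr) (f : mor a b) :=
  forall x, inC x -> forall (v w : mor x a) al be,
    is2cell v w al -> is2cell v w be -> comp (m1 f) al = comp (m1 f) be -> al = be.
Definition fullM (a b : arr) (f : mor a b) :=
  forall x, inC x -> forall (v w : mor x a) ga,
    is2cell (compM f v) (compM f w) ga ->
    exists al, is2cell v w al /\ comp (m1 f) al = ga.
Definition fully_faithfulM (a b : arr) (f : mor a b) := faithfulM f /\ fullM f.

Definition cofaithfulM (a b : arr) (f : mor a b) :=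
  forall x, inC x -> forall (v w : mor b x) al be,
    is2cell v w al -> is2cell v w be -> comp al (m0 f) = comp be (m0 f) -> al = be.
Definition cofullM (a b : arr) (f : mor a b) :=
  forall x, inC x -> forall (v w : mor b x) ga,
    is2cell (compM v f) (compM w f) ga ->
    exists al, is2cell v w al /\ comp al (m0 f) = ga.
Definition fully_cofaithfulM (a b : arr) (f : mor a b) := cofaithfulM f /\ cofullM f.

Definition discrete (a : arr) := faithfulM (zeroM a Z).
Definition codiscrete (a : arr) := cofaithfulM (zeroM Z a).

Definition contractible_hom (a b : arr) :=
  (exists f : mor a b, True) /\ forall f g : mor a b, exists! al, is2cell f g al.

Definition is_2zero (z : arr) :=
  inC z /\ forall x, inC x -> contractible_hom x z /\ contractible_hom z x.

(* Hom(x,p) -> Hom(x,a) x Hom(x,b) is an equivalence of groupoids *)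
Definition is_2product (a b p : arr) (p1 : mor p a) (p2 : mor p b) :=
  forall x, inC x ->
  [/\ (forall (v v' : mor x p) ga ga', is2cell v v' ga -> is2cell v v' ga' ->
         comp (m1 p1) ga = comp (m1 p1) ga' -> comp (m1 p2) ga = comp (m1 p2) ga' ->
         ga = ga'),
      (forall (v v' : mor x p) be1 be2,
         is2cell (compM p1 v) (compM p1 v') be1 ->
         is2cell (compM p2 v) (compM p2 v') be2 ->
         exists ga, [/\ is2cell v v' ga, comp (m1 p1) ga = be1 & comp (m1 p2) ga = be2])
    & (forall (w1 : mor x a) (w2 : mor x b), exists (v : mor x p) be1 be2,
         is2cell (compM p1 v) w1 be1 /\ is2cell (compM p2 v) w2 be2)].

(* Hom(p,x) -> Hom(a,x) x Hom(b,x) is an equivalence of groupoids *)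
Definition is_2coproduct (a b p : arr) (i1 : mor a p) (i2 : mor b p) :=
  forall x, inC x ->
  [/\ (forall (v v' : mor p x) ga ga', is2cell v v' ga -> is2cell v v' ga' ->
         comp ga (m0 i1) = comp ga' (m0 i1) -> comp ga (m0 i2) = comp ga' (m0 i2) ->
         ga = ga'),
      (forall (v v' : mor p x) be1 be2,
         is2cell (compM v i1) (compM v' i1) be1 ->
         is2cell (compM v i2) (compM v' i2) be2 ->
         exists ga, [/\ is2cell v v' ga, comp ga (m0 i1) = be1 & comp ga (m0 i2) = be2])
    & (forall (w1 : mor a x) (w2 : mor b x), exists (v : mor p x) be1 be2,
         is2cell (compM v i1) w1 be1 /\ is2cell (compM v i2) w2 be2)].

Definition is_2biproduct (a b p : arr) (p1 : mor p a) (p2 : mor p b)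
    (i1 : mor a p) (i2 : mor b p) :=
  [/\ is_2product p1 p2 /\ is_2coproduct i1 i2,
      (exists al, is2cell (compM p1 i1) (idM a) al),
      (exists al, is2cell (compM p2 i2) (idM b) al),
      (exists al, is2cell (compM p1 i2) (zeroM b a) al)
    & (exists al, is2cell (compM p2 i1) (zeroM a b) al)].

(* hom-groupoids carry the (strict) symmetric 2-group structure given by
   addition of components; composition is strictly bilinear for it.
   What remains of 2-additivity is the existence of finite biproducts. *)
Definition two_additive :=
  is_2zero Z /\
  forall a b, inC a -> inC b ->
    exists p (p1 : mor p a) (p2 : mor p b) (i1 : mor a p) (i2 : mor b p),
      inC p /\ is_2biproduct p1 p2 i1 i2.

Definition is_2kernel (a b : arr) (f : mor a b) (k : arr) (u : mor k a)
    (ka : hom (A0 k) (A1 b)) :=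
  is2cell (compM f u) (zeroM k b) ka /\
  forall x, inC x ->
  [/\ (forall (v v' : mor x k) ga ga', is2cell v v' ga -> is2cell v v' ga' ->
         comp (m1 u) ga = comp (m1 u) ga' -> ga = ga'),
      (forall (v v' : mor x k) be, is2cell (compM u v) (compM u v') be ->
         comp ka (m0 v) = comp (m1 f) be + comp ka (m0 v') ->
         exists ga, is2cell v v' ga /\ comp (m1 u) ga = be)
    & (forall (w : mor x a) ph, is2cell (compM f w) (zeroM x b) ph ->
         exists (v : mor x k) be,
           is2cell (compM u v) w be /\ comp ka (m0 v) = comp (m1 f) be + ph)].

Definition is_2cokernel (a b : arr) (f : mor a b) (c : arr) (q : mor b c)
    (ze : hom (A0 a) (A1 c)) :=
  is2cell (compM q f) (zeroM a c) ze /\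
  forall x, inC x ->
  [/\ (forall (v v' : mor c x) ga ga', is2cell v v' ga -> is2cell v v' ga' ->
         comp ga (m0 q) = comp ga' (m0 q) -> ga = ga'),
      (forall (v v' : mor c x) be, is2cell (compM v q) (compM v' q) be ->
         comp (m1 v) ze = comp be (m0 f) + comp (m1 v') ze ->
         exists ga, is2cell v v' ga /\ comp ga (m0 q) = be)
    & (forall (w : mor b x) ph, is2cell (compM w f) (zeroM a x) ph ->
         exists (v : mor c x) be,
           is2cell (compM v q) w be /\ comp (m1 v) ze = comp be (m0 f) + ph)].

Definition is_pip (a b : arr) (f : mor a b) (p : arr) (pi : hom (A0 p) (A1 a)) :=
  [/\ is2cell (zeroM p a) (zeroM p a) pi, comp (m1 f) pi = 0 &
  forall x, inC x ->
  [/\ (forall (v v' : mor x p) ga ga', is2cell v v' ga -> is2cell v v' ga' -> ga = ga'),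
      (forall (v v' : mor x p), comp pi (m0 v) = comp pi (m0 v') ->
         exists ga, is2cell v v' ga)
    & (forall xi, is2cell (zeroM x a) (zeroM x a) xi -> comp (m1 f) xi = 0 ->
         exists v : mor x p, comp pi (m0 v) = xi)]].

Definition is_copip (a b : arr) (f : mor a b) (c : arr) (ps : hom (A0 b) (A1 c)) :=
  [/\ is2cell (zeroM b c) (zeroM b c) ps, comp ps (m0 f) = 0 &
  forall x, inC x ->
  [/\ (forall (v v' : mor c x) ga ga', is2cell v v' ga -> is2cell v v' ga' -> ga = ga'),
      (forall (v v' : mor c x), comp (m1 v) ps = comp (m1 v') ps ->
         exists ga, is2cell v v' ga)
    & (forall xi, is2cell (zeroM b x) (zeroM b x) xi -> comp xi (m0 f) = 0 ->
         exists v : mor c x, comp (m1 v) ps = xi)]].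

Definition is_root (a b : arr) (al : hom (A0 a) (A1 b)) (R : arr) (r : mor R a) :=
  comp al (m0 r) = 0 /\
  forall x, inC x ->
  [/\ (forall (v v' : mor x R) ga ga', is2cell v v' ga -> is2cell v v' ga' ->
         comp (m1 r) ga = comp (m1 r) ga' -> ga = ga'),
      (forall (v v' : mor x R) be, is2cell (compM r v) (compM r v') be ->
         exists ga, is2cell v v' ga /\ comp (m1 r) ga = be)
    & (forall w : mor x a, comp al (m0 w) = 0 ->
         exists (v : mor x R) be, is2cell (compM r v) w be)].

Definition is_coroot (a b : arr) (al : hom (A0 a) (A1 b)) (C : arr) (c : mor b C) :=
  comp (m1 c) al = 0 /\
  forall x, inC x ->
  [/\ (forall (v v' : mor C x) ga ga', is2cell v v' ga -> is2cell v v' ga' ->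
         comp ga (m0 c) = comp ga' (m0 c) -> ga = ga'),
      (forall (v v' : mor C x) be, is2cell (compM v c) (compM v' c) be ->
         exists ga, is2cell v v' ga /\ comp ga (m0 c) = be)
    & (forall w : mor b x, comp (m1 w) al = 0 ->
         exists (v : mor C x) be, is2cell (compM v c) w be)].

Definition has_2kernels :=
  forall a b (f : mor a b), inC a -> inC b ->
    exists k (u : mor k a) (ka : hom (A0 k) (A1 b)), inC k /\ is_2kernel f u ka.
Definition has_2cokernels :=
  forall a b (f : mor a b), inC a -> inC b ->
    exists c (q : mor b c) (ze : hom (A0 a) (A1 c)), inC c /\ is_2cokernel f q ze.
Definition has_pips :=
  forall a b (f : mor a b), inC a -> inC b ->
    exists p (pi : hom (A0 p) (A1 a)), inC p /\ is_pip f pi.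
Definition has_copips :=
  forall a b (f : mor a b), inC a -> inC b ->
    exists c (ps : hom (A0 b) (A1 c)), inC c /\ is_copip f ps.
Definition has_roots :=
  forall a b al, inC a -> inC b -> is2cell (zeroM a b) (zeroM a b) al ->
    exists R (r : mor R a), inC R /\ is_root al r.
Definition has_coroots :=
  forall a b al, inC a -> inC b -> is2cell (zeroM a b) (zeroM a b) al ->
    exists C (c : mor b C), inC C /\ is_coroot al c.

Definition two_Puppe_exact :=
  [/\ (forall a b (f : mor a b), inC a -> inC b -> faithfulM f ->
         forall c (q : mor b c) ze, inC c -> is_2cokernel f q ze -> is_2kernel q f ze),
      (forall a b (f : mor a b), inC a -> inC b -> cofaithfulM f ->
         forall k (u : mor k a) ka, inC k -> is_2kernel f u ka -> is_2cokernel u f ka),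
      (forall a b (f : mor a b), inC a -> inC b -> fully_faithfulM f ->
         forall c (ps : hom (A0 b) (A1 c)), inC c -> is_copip f ps -> is_root ps f)
    & (forall a b (f : mor a b), inC a -> inC b -> fully_cofaithfulM f ->
         forall p (pi : hom (A0 p) (A1 a)), inC p -> is_pip f pi -> is_coroot pi f)].

Definition two_abelian :=
  [/\ two_additive, has_2kernels /\ has_2cokernels, has_pips /\ has_copips,
      has_roots /\ has_coroots & two_Puppe_exact].

(* The functor sends the class of f : a -> b to the unique h : Coker a -> Coker b
   with h ca = cb f0.  Equivalence = faithful + full + essentially surjective. *)
Definition discrete_coker_equivalence :=
  (forall a b, inC a -> inC b -> discrete a -> discrete b ->
   forall (Ca : A) (ca : hom (A0 a) Ca) (Cb : A) (cb : hom (A0 b) Cb),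
   is_cokernel (amap a) ca -> is_cokernel (amap b) cb ->
   (forall (f g : mor a b) (h : hom Ca Cb),
      comp h ca = comp cb (m0 f) -> comp h ca = comp cb (m0 g) ->
      exists al, is2cell f g al) /\
   (forall h : hom Ca Cb, exists f : mor a b, comp h ca = comp cb (m0 f))) /\
  (forall X : A, exists a, [/\ inC a, discrete a &
      exists c : hom (A0 a) X, is_cokernel (amap a) c]).

Definition codiscrete_ker_equivalence :=
  (forall a b, inC a -> inC b -> codiscrete a -> codiscrete b ->
   forall (Ka : A) (ka : hom Ka (A1 a)) (Kb : A) (kb : hom Kb (A1 b)),
   is_kernel (amap a) ka -> is_kernel (amap b) kb ->
   (forall (f g : mor a b) (h : hom Ka Kb),
      comp kb h = comp (m1 f) ka -> comp kb h = comp (m1 g) ka ->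
      exists al, is2cell f g al) /\
   (forall h : hom Ka Kb, exists f : mor a b, comp kb h = comp (m1 f) ka)) /\
  (forall X : A, exists a, [/\ inC a, codiscrete a &
      exists k : hom X (A1 a), is_kernel (amap a) k]).

End Abelian.

From Pilot Require Import Defs.
From mathcomp Require Import all_boot all_algebra.
Set Implicit Arguments. Unset Strict Implicit. Unset Printing Implicit Defensive.
Import GRing.Theory.
Local Open Scope ring_scope.

(* All the 2-dimensional structure of A^[1]_c is computed in A: a 2-cell
   between f, g : a -> b is a map A0 a -> A1 b.  Testing against the objects
   0 -> P and T -> 0 of A^[1]_c shows that for faithful f the pair
   (amap a, m1 f) is jointly monic, and for cofaithful f the pair
   (m0 f, amap b) is jointly epic.  So discrete objects are projective presentations
   A1 >-> A0 ->> Coker, and codiscrete objects are epis A1 ->> A0 onto a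
   projective, determined up to equivalence by their kernel.
   A 2-kernel of f comes from the pullback of m0 f and amap b covered by a
   projective, a 2-cokernel from the pushout of amap a and m1 f; pips, copips,
   roots and coroots come from (co)kernels in A in the same way.  For Puppe
   exactness, the required universal property is checked on these explicit
   constructions and then transported to an arbitrary 2-(co)kernel along the
   comparison morphism, whose components are monic (epic) modulo amap. *)

Local Notation hom := Defs.hom.
Local Notation comp := Defs.comp.
Local Notation compA := Defs.compA.
Local Notation "g ⊙ f" := (comp g f) (at level 40, left associativity).

(* Identities in an abelian group, decided by reflection: both sides are read
   as Z-combinations of a common list of atoms and the coefficients compared. *)
Module ZmodExpr.
Inductive expr := Atom of nat | Zero | Add of expr & expr | Opp of expr.

Section Eval.
Variable V : zmodType.

Fixpoint eval (env : seq V) (e : expr) : V :=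
  match e with
  | Atom n => nth 0 env n
  | Zero => 0
  | Add a b => eval env a + eval env b
  | Opp a => - eval env a
  end.

Fixpoint coef (e : expr) (i : nat) : int :=
  match e with
  | Atom n => if (i == n)%N then 1 else 0
  | Zero => 0
  | Add a b => coef a i + coef b i
  | Opp a => - coef a i
  end.

Definition combination (env : seq V) (c : nat -> int) : V :=
  \sum_(i < size env) env`_i *~ c i.

Lemma eval_combination env e : eval env e = combination env (coef e).
Proof.
rewrite /combination; elim: e => [n||a IHa b IHb|a IHa] /=.
- case: (ltnP n (size env)) => [lt|le].
    rewrite (bigD1 (Ordinal lt)) //= eqxx mulr1z big1 ?addr0 // => i /eqP ne.
    by case: ifP => // /eqP E; case: ne; apply: val_inj.
  rewrite nth_default // big1 // => i _; case: ifP => // /eqP E.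
  by move: (ltn_ord i); rewrite E ltnNge le.
- by rewrite big1 // => i _; rewrite mulr0z.
- by rewrite IHa IHb -big_split /=; apply: eq_bigr => i _; rewrite mulrzDr.
- by rewrite IHa -sumrN; apply: eq_bigr => i _; rewrite mulrNz.
Qed.

Lemma eval_eq env e1 e2 n : (size env <= n)%N ->
  all (fun i => coef e1 i == coef e2 i) (iota 0 n) -> eval env e1 = eval env e2.
Proof.
move=> le /allP H; rewrite !eval_combination /combination; apply: eq_bigr => i _.
have /eqP -> // : coef e1 i == coef e2 i.
by apply: H; rewrite mem_iota add0n (leq_trans (ltn_ord i)).
Qed.
End Eval.
End ZmodExpr.

Ltac zmod_index t env :=
  lazymatch env with
  | t :: _ => constr:(0%N)
  | _ :: ?r => let n := zmod_index t r in constr:(S n)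
  end.
Ltac zmod_insert t env :=
  let known := match constr:(tt) with
               | _ => let n := zmod_index t env in constr:(true)
               | _ => constr:(false) end in
  match known with true => env | false => constr:(t :: env) end.
Ltac zmod_atoms t env :=
  lazymatch t with
  | (?a + ?b)%R => let e := zmod_atoms a env in zmod_atoms b e
  | (- ?a)%R => zmod_atoms a env
  | 0%R => env
  | _ => zmod_insert t env
  end.
Ltac zmod_reify t env :=
  lazymatch t with
  | (?a + ?b)%R =>
      let x := zmod_reify a env in let y := zmod_reify b env in constr:(ZmodExpr.Add x y)
  | (- ?a)%R => let x := zmod_reify a env in constr:(ZmodExpr.Opp x)
  | 0%R => constr:(ZmodExpr.Zero)
  | _ => let n := zmod_index t env in constr:(ZmodExpr.Atom n)
  end.
Ltac zmod_solve :=
  lazymatch goal with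
  | |- @eq ?T ?l ?r =>
    let env := zmod_atoms l (@nil T) in
    let env := zmod_atoms r env in
    let el := zmod_reify l env in
    let er := zmod_reify r env in
    change (ZmodExpr.eval env el = ZmodExpr.eval env er);
    apply: (@ZmodExpr.eval_eq _ env el er (size env)); [exact: leqnn | exact (erefl true)]
  end.

Section Preadditive.
Variable A : PreAdditive.

Lemma compNl (x y z : A) (g : hom y z) (f : hom x y) : (- g) ⊙ f = - (g ⊙ f).
Proof. apply/eqP; rewrite -subr_eq0 opprK -compDl addNr; exact/eqP/comp0m. Qed.
Lemma compNr (x y z : A) (g : hom y z) (f : hom x y) : g ⊙ (- f) = - (g ⊙ f).
Proof. apply/eqP; rewrite -subr_eq0 opprK -compDr addNr; exact/eqP/compm0. Qed.
Lemma compBl (x y z : A) (g g' : hom y z) (f : hom x y) : (g - g') ⊙ f = g ⊙ f - g' ⊙ f.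
Proof. by rewrite compDl compNl. Qed.
Lemma compBr (x y z : A) (g : hom y z) (f f' : hom x y) : g ⊙ (f - f') = g ⊙ f - g ⊙ f'.
Proof. by rewrite compDr compNr. Qed.

Lemma comp_eq_prefix (x y z t : A) (g : hom y z) (f : hom x y) (r : hom x z) :
  g ⊙ f = r -> forall h : hom z t, h ⊙ g ⊙ f = h ⊙ r.
Proof. by move=> E h; rewrite -compA E. Qed.

Lemma hom_to_zo_eq (x : A) (f g : hom x zo) : f = g.
Proof. by rewrite (zo_term f) (zo_term g). Qed.
Lemma hom_from_zo_eq (x : A) (f g : hom zo x) : f = g.
Proof. by rewrite (zo_init f) (zo_init g). Qed.

Lemma projective_zo : projective (@zo A).
Proof. by move=> x y e _ g; exists 0; apply: hom_from_zo_eq. Qed.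

Lemma retract_projective (P X : A) (s : hom X P) (r : hom P X) :
  r ⊙ s = idm X -> projective P -> projective X.
Proof.
move=> rs pP x y e ee g; have [h hE] := pP _ _ _ ee (g ⊙ r).
by exists (h ⊙ s); rewrite compA hE -compA rs compm1.
Qed.

Lemma mono_comp (x y z : A) (g : hom y z) (f : hom x y) : mono g -> mono f -> mono (g ⊙ f).
Proof. by move=> mg mf t u v; rewrite -!compA => /mg /mf. Qed.
Lemma epi_comp (x y z : A) (g : hom y z) (f : hom x y) : epi g -> epi f -> epi (g ⊙ f).
Proof. by move=> eg ef t u v; rewrite !compA => /ef /eg. Qed.

Lemma mono_comp_eq0 (x y t : A) (m : hom x y) (g : hom t x) : mono m -> m ⊙ g = 0 -> g = 0.
Proof. by move=> mm E; apply: mm; rewrite E compm0. Qed.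
Lemma epi_comp_eq0 (x y t : A) (e : hom x y) (g : hom y t) : epi e -> g ⊙ e = 0 -> g = 0.
Proof. by move=> ee E; apply: ee; rewrite E comp0m. Qed.

Lemma mono_of_comp0 (x y : A) (m : hom x y) :
  (forall t (g : hom t x), m ⊙ g = 0 -> g = 0) -> mono m.
Proof. by move=> H t g h E; apply: subr0_eq; apply: H; rewrite compBr E subrr. Qed.
Lemma epi_of_comp0 (x y : A) (e : hom x y) :
  (forall t (g : hom y t), g ⊙ e = 0 -> g = 0) -> epi e.
Proof. by move=> H t g h E; apply: subr0_eq; apply: H; rewrite compBl E subrr. Qed.

Lemma kernel_factor (x y K t : A) (f : hom x y) (k : hom K x) (g : hom t x) :
  is_kernel f k -> f ⊙ g = 0 -> exists h, k ⊙ h = g.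
Proof. by case=> _ U /U [h [E _]]; exists h. Qed.
Lemma cokernel_factor (x y C t : A) (f : hom x y) (c : hom y C) (g : hom y t) :
  is_cokernel f c -> g ⊙ f = 0 -> exists h, h ⊙ c = g.
Proof. by case=> _ U /U [h [E _]]; exists h. Qed.

Lemma kernel_mono (x y K : A) (f : hom x y) (k : hom K x) : is_kernel f k -> mono k.
Proof.
case=> fk0 U t g h E.
have [h0 [_ U0]] : exists! h0, k ⊙ h0 = k ⊙ g by apply: U; rewrite compA fk0 comp0m.
by rewrite -(U0 g erefl) (U0 h (esym E)).
Qed.
Lemma cokernel_epi (x y C : A) (f : hom x y) (c : hom y C) : is_cokernel f c -> epi c.
Proof.
case=> cf0 U t g h E.
have [h0 [_ U0]] : exists! h0, h0 ⊙ c = g ⊙ c by apply: U; rewrite -compA cf0 compm0.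
by rewrite -(U0 g erefl) (U0 h (esym E)).
Qed.

Section Biproduct.
Variables (x y w : A) (p1 : hom w x) (p2 : hom w y) (i1 : hom x w) (i2 : hom y w).
Hypothesis B : is_biproduct p1 p2 i1 i2.

Lemma biprod_p1i1 : p1 ⊙ i1 = idm x. Proof. by case: B. Qed.
Lemma biprod_p2i2 : p2 ⊙ i2 = idm y. Proof. by case: B. Qed.
Lemma biprod_p1i2 : p1 ⊙ i2 = 0. Proof. by case: B. Qed.
Lemma biprod_p2i1 : p2 ⊙ i1 = 0. Proof. by case: B. Qed.

Lemma biprod_eq_proj (t : A) (u v : hom t w) :
  p1 ⊙ u = p1 ⊙ v -> p2 ⊙ u = p2 ⊙ v -> u = v.
Proof.
move=> E1 E2; have [_ _ _ _ id_w] := B.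
by rewrite -(comp1m u) -(comp1m v) -id_w !compDl -!compA E1 E2.
Qed.
Lemma biprod_eq_inj (t : A) (u v : hom w t) :
  u ⊙ i1 = v ⊙ i1 -> u ⊙ i2 = v ⊙ i2 -> u = v.
Proof.
move=> E1 E2; have [_ _ _ _ id_w] := B.
by rewrite -(compm1 u) -(compm1 v) -id_w !compDr !compA E1 E2.
Qed.

Lemma biprod_projective : projective x -> projective y -> projective w.
Proof.
move=> Px Py a b e ee g; have [_ _ _ _ id_w] := B.
have [h1 E1] := Px _ _ _ ee (g ⊙ i1); have [h2 E2] := Py _ _ _ ee (g ⊙ i2).
exists (h1 ⊙ p1 + h2 ⊙ p2).
by rewrite compDr !compA E1 E2 -!compA -compDr id_w compm1.
Qed.
End Biproduct.

End Preadditive.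

Ltac comp_simpl := repeat progress rewrite ?compDl ?compDr ?compNl ?compNr ?compA
   ?comp0m ?compm0 ?comp1m ?compm1 ?addr0 ?add0r ?oppr0 ?subr0 ?sub0r ?opprK;
   try reflexivity.
Ltac comp_rw E := rewrite ?(E, comp_eq_prefix E).
Ltac comp_solve := rewrite /=; comp_simpl; zmod_solve.
Ltac biprod_simpl B := comp_rw (biprod_p1i1 B); comp_rw (biprod_p2i2 B);
  comp_rw (biprod_p1i2 B); comp_rw (biprod_p2i1 B); comp_simpl.

Lemma subr_eq_close (V : zmodType) (l r l' r' : V) : l' = r' -> l - r = l' - r' -> l = r.
Proof. by move=> E1 E2; apply/subr0_eq; rewrite E2 E1 subrr. Qed.
Lemma congrD (V : zmodType) (x y z t : V) : x = y -> z = t -> x + z = y + t.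
Proof. by move=> -> ->. Qed.
Lemma congrN (V : zmodType) (x y : V) : x = y -> - x = - y.
Proof. by move=> ->. Qed.

(* [lin E] proves l = r when l - r and l' - r' agree as formal sums, where
   E : l' = r' is a linear combination of known equations, built with
   whiskering (X <| E, E |> Y), congrD and congrN. *)
Ltac lin E := apply: (subr_eq_close E); comp_solve.
Local Notation "X <| E" := (congr1 (comp X) E) (at level 20).
Local Notation "E |> Y" := (congr1 (fun t => comp t Y) E) (at level 20).

Section AbelianFacts.
Variable A : PreAdditive.
Hypothesis HA : abelian A.

Lemma kernel_exists (x y : A) (f : hom x y) : exists K (k : hom K x), is_kernel f k.
Proof. by case: HA. Qed.
Lemma cokernel_exists (x y : A) (f : hom x y) : exists C (c : hom y C), is_cokernel f c.
Proof. by case: HA. Qed.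
Lemma biprod_exists (x y : A) :
  exists w (p1 : hom w x) (p2 : hom w y) i1 i2, is_biproduct p1 p2 i1 i2.
Proof. by case: HA. Qed.

Lemma mono_kernel_of_cokernel (x y C : A) (m : hom x y) (c : hom y C) :
  mono m -> is_cokernel m c -> is_kernel c m.
Proof.
move=> mm cc; have [_ _ _ Hm _] := HA.
have [Z [g gk]] := Hm _ _ m mm.
split; first by case: cc.
move=> t u cu0.
have [z zc] := cokernel_factor cc (proj1 gk).
have : g ⊙ u = 0 by rewrite -zc -compA cu0 compm0.
case/(proj2 gk) => h [hE _]; exists h; split => // h' E.
by apply: mm; rewrite E hE.
Qed.

Lemma epi_cokernel_of_kernel (x y K : A) (e : hom x y) (k : hom K x) :
  epi e -> is_kernel e k -> is_cokernel k e.
Proof.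
move=> ee kk; have [_ _ _ _ He] := HA.
have [Z [g gk]] := He _ _ e ee.
split; first by case: kk.
move=> t u uk0.
have [z zc] := kernel_factor kk (proj1 gk).
have : u ⊙ g = 0 by rewrite -zc compA uk0 comp0m.
case/(proj2 gk) => h [hE _]; exists h; split => // h' E.
by apply: ee; rewrite E hE.
Qed.

Lemma mono_epi_iso (x y : A) (m : hom x y) : mono m -> epi m ->
  exists h, h ⊙ m = idm x /\ m ⊙ h = idm y.
Proof.
move=> mm me; have [_ _ _ Hm _] := HA.
have [Z [g [gm U]]] := Hm _ _ m mm.
have g0 : g = 0 by apply: (epi_comp_eq0 me).
have [h [hE _]] : exists! h, m ⊙ h = idm y by apply: U; rewrite g0 comp0m.
by exists h; split => //; apply: mm; rewrite compA hE comp1m compm1.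
Qed.

Lemma image_factorization (x y : A) (h : hom x y) : exists I (m : hom I y) (h' : hom x I),
  [/\ mono m, epi h', h = m ⊙ h' &
      forall C (c : hom y C), is_cokernel h c -> is_kernel c m].
Proof.
have [C0 [c0 cc0]] := cokernel_exists h.
have [I [m mk]] := kernel_exists c0.
have [h' hE] := kernel_factor mk (proj1 cc0).
have mm := kernel_mono mk.
have eh' : epi h'.
  apply: epi_of_comp0 => T s sh.
  have [N [n nk]] := kernel_exists s.
  have [h'' h''E] := kernel_factor nk sh.
  have [_ _ _ Hm _] := HA.
  have [Z [g2 g2k]] := Hm _ _ _ (mono_comp mm (kernel_mono nk)).
  have : g2 ⊙ h = 0 by rewrite -hE -h''E (compA m) compA (proj1 g2k) comp0m.
  case/(cokernel_factor cc0) => z zE.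
  have : g2 ⊙ m = 0 by rewrite -zE -compA (proj1 mk) compm0.
  case/(kernel_factor g2k) => r rE.
  have nr : n ⊙ r = idm I by apply: mm; rewrite compA rE compm1.
  by rewrite -(compm1 s) -nr compA (proj1 nk) comp0m.
exists I, m, h'; split => // C c cc.
have cm : c ⊙ m = 0 by apply: (epi_comp_eq0 eh'); rewrite -compA hE (proj1 cc).
split => // t u cu.
have [z zE] := cokernel_factor cc (proj1 cc0).
have : c0 ⊙ u = 0 by rewrite -zE -compA cu compm0.
case/(proj2 mk) => v [vE _]; exists v; split => // v' E.
by apply: mm; rewrite E vE.
Qed.

Lemma projective_lift_exact (x y C P : A) (h : hom x y) (c : hom y C) (g : hom P y) :
  is_cokernel h c -> projective P -> c ⊙ g = 0 -> exists t, h ⊙ t = g.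
Proof.
move=> cc pP cg.
have [I [m [h' [mm eh' hE mk]]]] := image_factorization h.
have [g' g'E] := kernel_factor (mk _ _ cc) cg.
have [t tE] := pP _ _ _ eh' g'.
by exists t; rewrite hE -compA tE.
Qed.

Lemma joint_kernel (x y z : A) (g : hom x y) (h : hom x z) : exists K (k : hom K x),
  [/\ mono k, g ⊙ k = 0, h ⊙ k = 0 &
      forall T (xi : hom T x), g ⊙ xi = 0 -> h ⊙ xi = 0 -> exists xi', k ⊙ xi' = xi].
Proof.
have [K1 [k1 kk1]] := kernel_exists g.
have [K [k2 kk2]] := kernel_exists (h ⊙ k1).
exists K, (k1 ⊙ k2); split.
- exact: mono_comp (kernel_mono kk1) (kernel_mono kk2).
- by rewrite compA (proj1 kk1) comp0m.
- by rewrite compA (proj1 kk2).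
- move=> T xi g0 h0.
  have [yy yE] := kernel_factor kk1 g0.
  have : h ⊙ k1 ⊙ yy = 0 by rewrite -compA yE.
  by case/(kernel_factor kk2) => zz zE; exists zz; rewrite -compA zE.
Qed.

Lemma joint_cokernel (x y z : A) (g : hom y x) (h : hom z x) : exists C (c : hom x C),
  [/\ epi c, c ⊙ g = 0, c ⊙ h = 0,
      (forall T (xi : hom x T), xi ⊙ g = 0 -> xi ⊙ h = 0 -> exists xi', xi' ⊙ c = xi) &
      (forall P (xi : hom P x), projective P -> c ⊙ xi = 0 ->
         exists y1 y0, g ⊙ y1 + h ⊙ y0 = xi)].
Proof.
have [C1 [c1 cc1]] := cokernel_exists g.
have [C [c2 cc2]] := cokernel_exists (c1 ⊙ h).
exists C, (c2 ⊙ c1); split.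
- exact: epi_comp (cokernel_epi cc2) (cokernel_epi cc1).
- by rewrite -compA (proj1 cc1) compm0.
- by rewrite -compA (proj1 cc2).
- move=> T xi g0 h0.
  have [yy yE] := cokernel_factor cc1 g0.
  have : yy ⊙ (c1 ⊙ h) = 0 by rewrite compA yE.
  by case/(cokernel_factor cc2) => zz zE; exists zz; rewrite compA zE.
- move=> P xi pP cx.
  have cx' : c2 ⊙ (c1 ⊙ xi) = 0 by rewrite compA.
  have [y0 y0E] := projective_lift_exact cc2 pP cx'.
  have : c1 ⊙ (xi - h ⊙ y0) = 0 by rewrite compBr -y0E compA subrr.
  case/(projective_lift_exact cc1 pP) => y1 y1E.
  by exists y1, y0; rewrite y1E subrK.
Qed.

Definition is_pullback (X Y Z P : A) (f : hom X Z) (g : hom Y Z)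
    (p : hom P X) (q : hom P Y) :=
  [/\ f ⊙ p = g ⊙ q,
      (forall T (u : hom T X) (v : hom T Y), f ⊙ u = g ⊙ v ->
         exists h, p ⊙ h = u /\ q ⊙ h = v)
    & (forall T (h h' : hom T P), p ⊙ h = p ⊙ h' -> q ⊙ h = q ⊙ h' -> h = h')].

Definition is_pushout (X Y Z P : A) (f : hom Z X) (g : hom Z Y)
    (p : hom X P) (q : hom Y P) :=
  [/\ p ⊙ f = q ⊙ g,
      (forall T (u : hom X T) (v : hom Y T), u ⊙ f = v ⊙ g ->
         exists h, h ⊙ p = u /\ h ⊙ q = v)
    & (forall T (h h' : hom P T), h ⊙ p = h' ⊙ p -> h ⊙ q = h' ⊙ q -> h = h')].

Lemma pullback_kernel (X Y Z P W : A) (f : hom X Z) (g : hom Y Z) (p : hom P X)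
    (q : hom P Y) (p1 : hom W X) (p2 : hom W Y) i1 i2 :
  is_biproduct p1 p2 i1 i2 -> is_pullback f g p q ->
  is_kernel (f ⊙ p1 - g ⊙ p2) (i1 ⊙ p + i2 ⊙ q).
Proof.
move=> B [C U M]; split; first by comp_simpl; biprod_simpl B; rewrite C; zmod_solve.
move=> T u du.
have du' : f ⊙ (p1 ⊙ u) = g ⊙ (p2 ⊙ u).
  by apply/eqP; rewrite -subr_eq0 !compA -compBl du.
have [h [h1 h2]] := U _ _ _ du'.
have kh : (i1 ⊙ p + i2 ⊙ q) ⊙ h = u.
  by apply: (biprod_eq_proj B); comp_simpl; biprod_simpl B; rewrite ?h1 ?h2.
exists h; split => // h' E; apply: M.
  by have := congr1 (comp p1) E; rewrite -kh; comp_simpl; biprod_simpl B.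
by have := congr1 (comp p2) E; rewrite -kh; comp_simpl; biprod_simpl B.
Qed.

Lemma pushout_cokernel (X Y Z P W : A) (f : hom Z X) (g : hom Z Y) (p : hom X P)
    (q : hom Y P) (p1 : hom W X) (p2 : hom W Y) i1 i2 :
  is_biproduct p1 p2 i1 i2 -> is_pushout f g p q ->
  is_cokernel (i1 ⊙ f - i2 ⊙ g) (p ⊙ p1 + q ⊙ p2).
Proof.
move=> B [C U M]; split; first by comp_simpl; biprod_simpl B; rewrite C; zmod_solve.
move=> T u du.
have du' : u ⊙ i1 ⊙ f = u ⊙ i2 ⊙ g by apply: subr0_eq; rewrite -du; comp_solve.
have [h [h1 h2]] := U _ _ _ du'.
have kh : h ⊙ (p ⊙ p1 + q ⊙ p2) = u.
  by apply: (biprod_eq_inj B); comp_simpl; rewrite ?h1 ?h2; biprod_simpl B; rewrite ?h1 ?h2.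
exists h; split => // h' E; apply: M.
  by have := congr1 (fun t => t ⊙ i1) E; rewrite -kh; comp_simpl; biprod_simpl B.
by have := congr1 (fun t => t ⊙ i2) E; rewrite -kh; comp_simpl; biprod_simpl B.
Qed.

Lemma pullback_exists (X Y Z : A) (f : hom X Z) (g : hom Y Z) :
  exists P (p : hom P X) (q : hom P Y), is_pullback f g p q.
Proof.
have [W [p1 [p2 [i1 [i2 B]]]]] := biprod_exists X Y.
have [P [k kk]] := kernel_exists (f ⊙ p1 - g ⊙ p2).
exists P, (p1 ⊙ k), (p2 ⊙ k); split.
- by apply: subr0_eq; rewrite -(proj1 kk); comp_solve.
- move=> T u v E.
  have [h hE] : exists h, k ⊙ h = i1 ⊙ u + i2 ⊙ v.
    by apply: (kernel_factor kk); comp_simpl; biprod_simpl B; rewrite E; zmod_solve.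
  by exists h; rewrite -!compA hE; split; comp_simpl; biprod_simpl B.
- move=> T h h' E1 E2; apply: (kernel_mono kk); apply: (biprod_eq_proj B).
    by rewrite !compA.
  by rewrite !compA.
Qed.

Lemma pushout_exists (X Y Z : A) (f : hom Z X) (g : hom Z Y) :
  exists P (p : hom X P) (q : hom Y P), is_pushout f g p q.
Proof.
have [W [p1 [p2 [i1 [i2 B]]]]] := biprod_exists X Y.
have [P [c cc]] := cokernel_exists (i1 ⊙ f - i2 ⊙ g).
exists P, (c ⊙ i1), (c ⊙ i2); split.
- by apply: subr0_eq; rewrite -(proj1 cc); comp_solve.
- move=> T u v E.
  have [h hE] : exists h, h ⊙ c = u ⊙ p1 + v ⊙ p2.
    by apply: (cokernel_factor cc); comp_simpl; biprod_simpl B; rewrite E; zmod_solve.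
  by exists h; rewrite !compA hE; split; comp_simpl; biprod_simpl B.
- move=> T h h' E1 E2; apply: (cokernel_epi cc); apply: (biprod_eq_inj B).
    by rewrite -!compA.
  by rewrite -!compA.
Qed.

Section Pullback.
Variables (X Y Z P : A) (f : hom X Z) (g : hom Y Z) (p : hom P X) (q : hom P Y).
Hypothesis PB : is_pullback f g p q.
Hypothesis jointly_epi : forall T (y : hom Z T), y ⊙ f = 0 -> y ⊙ g = 0 -> y = 0.

Lemma pullback_short_exact : exists W (p1 : hom W X) (p2 : hom W Y) i1 i2,
  [/\ is_biproduct p1 p2 i1 i2, is_kernel (f ⊙ p1 - g ⊙ p2) (i1 ⊙ p + i2 ⊙ q)
    & is_cokernel (i1 ⊙ p + i2 ⊙ q) (f ⊙ p1 - g ⊙ p2)].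
Proof.
have [W [p1 [p2 [i1 [i2 B]]]]] := biprod_exists X Y.
have kk := pullback_kernel B PB.
exists W, p1, p2, i1, i2; split => //; apply: epi_cokernel_of_kernel => //.
apply: epi_of_comp0 => T y yd; apply: jointly_epi.
  by have := congr1 (fun t => t ⊙ i1) yd; comp_simpl; biprod_simpl B.
have := congr1 (fun t => t ⊙ i2) yd; comp_simpl; biprod_simpl B.
by move/eqP; rewrite oppr_eq0 => /eqP.
Qed.

Lemma pullback_copair_factor T (u : hom X T) (v : hom Y T) : u ⊙ p = v ⊙ q ->
  exists ga, ga ⊙ f = u /\ ga ⊙ g = v.
Proof.
move=> E; have [W [p1 [p2 [i1 [i2 [B kk cc]]]]]] := pullback_short_exact.
have [ga gaE] : exists ga, ga ⊙ (f ⊙ p1 - g ⊙ p2) = u ⊙ p1 - v ⊙ p2.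
  by apply: (cokernel_factor cc); comp_simpl; biprod_simpl B; rewrite E; zmod_solve.
exists ga; split.
  by have := congr1 (fun t => t ⊙ i1) gaE; comp_simpl; biprod_simpl B.
have := congr1 (fun t => t ⊙ i2) gaE; comp_simpl; biprod_simpl B.
by move/eqP; rewrite eqr_opp => /eqP.
Qed.

(* Over a projective Z the short exact sequence splits. *)
Lemma projective_pullback_split T (ph : hom P T) :
  projective Z -> exists u v, u ⊙ p + v ⊙ q = ph.
Proof.
move=> PZ; have [W [p1 [p2 [i1 [i2 [B kk cc]]]]]] := pullback_short_exact.
set d := f ⊙ p1 - g ⊙ p2; set k := i1 ⊙ p + i2 ⊙ q.
have [s sE] := PZ _ _ d (cokernel_epi cc) (idm Z).
have [r rE] : exists r, k ⊙ r = idm W - s ⊙ d.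
  by apply: (kernel_factor kk); rewrite compBr compA sE comp1m compm1 subrr.
have rk : r ⊙ k = idm P.
  apply: (kernel_mono kk); rewrite compA rE compBl -compA (proj1 kk) compm0 subr0.
  by rewrite comp1m compm1.
exists (ph ⊙ r ⊙ i1), (ph ⊙ r ⊙ i2).
by rewrite -[RHS]compm1 -rk /k; comp_solve.
Qed.
End Pullback.

Lemma pullback_epi (X Y Z P : A) (f : hom X Z) (g : hom Y Z) (p : hom P X) (q : hom P Y) :
  is_pullback f g p q -> epi f -> epi q.
Proof.
move=> PB ef; apply: epi_of_comp0 => T z zq.
have jointly_epi T' (y : hom Z T') : y ⊙ f = 0 -> y ⊙ g = 0 -> y = 0.
  by move/(epi_comp_eq0 ef).
have E0 : (0 : hom X T) ⊙ p = z ⊙ q by rewrite zq comp0m.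
have [ga [g1 g2]] := pullback_copair_factor PB jointly_epi E0.
by rewrite -g2 (epi_comp_eq0 ef g1) comp0m.
Qed.

Section Pushout.
Variables (X Y Z P : A) (f : hom Z X) (g : hom Z Y) (p : hom X P) (q : hom Y P).
Hypothesis PO : is_pushout f g p q.

Lemma pushout_pair_factor T (u : hom T X) (v : hom T Y) :
  (forall S (t : hom S Z), f ⊙ t = 0 -> g ⊙ t = 0 -> t = 0) ->
  p ⊙ u = q ⊙ v -> exists t, f ⊙ t = u /\ g ⊙ t = v.
Proof.
move=> jointly_mono E.
have [W [p1 [p2 [i1 [i2 B]]]]] := biprod_exists X Y.
have cc := pushout_cokernel B PO.
have mh : mono (i1 ⊙ f - i2 ⊙ g).
  apply: mono_of_comp0 => S t ht; apply: jointly_mono.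
    by have := congr1 (comp p1) ht; comp_simpl; biprod_simpl B.
  have := congr1 (comp p2) ht; comp_simpl; biprod_simpl B.
  by move/eqP; rewrite oppr_eq0 => /eqP.
have kk := mono_kernel_of_cokernel mh cc.
have [t tE] : exists t, (i1 ⊙ f - i2 ⊙ g) ⊙ t = i1 ⊙ u - i2 ⊙ v.
  by apply: (kernel_factor kk); comp_simpl; biprod_simpl B; rewrite E; zmod_solve.
exists t; split.
  by have := congr1 (comp p1) tE; comp_simpl; biprod_simpl B.
have := congr1 (comp p2) tE; comp_simpl; biprod_simpl B.
by move/eqP; rewrite eqr_opp => /eqP.
Qed.

Lemma pushout_projective_lift T (ph : hom T P) :
  projective T -> exists u v, p ⊙ u + q ⊙ v = ph.
Proof.
move=> PT; have [W [p1 [p2 [i1 [i2 B]]]]] := biprod_exists X Y.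
have cc := pushout_cokernel B PO.
have [w wE] := PT _ _ _ (cokernel_epi cc) ph.
by exists (p1 ⊙ w), (p2 ⊙ w); rewrite -wE; comp_solve.
Qed.

(* For projective P the sequence Z -> X (+) Y -> P -> 0 splits, so every map
   out of Z killing the joint kernel of (f, g) extends along f and g. *)
Lemma projective_pushout_split T (w : hom Z T) : projective P ->
  (forall S (t : hom S Z), f ⊙ t = 0 -> g ⊙ t = 0 -> w ⊙ t = 0) ->
  exists u v, u ⊙ f + v ⊙ g = w.
Proof.
move=> PP Hw; have [W [p1 [p2 [i1 [i2 B]]]]] := biprod_exists X Y.
have cc := pushout_cokernel B PO.
set h := i1 ⊙ f - i2 ⊙ g; set c := p ⊙ p1 + q ⊙ p2.
have [s sE] := PP _ _ c (cokernel_epi cc) (idm P).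
have [I [m [h' [mm eh' hE mk]]]] := image_factorization h.
have mk' := mk _ _ cc.
have [r rE] : exists r, m ⊙ r = idm W - s ⊙ c.
  by apply: (kernel_factor mk'); rewrite compBr compA sE comp1m compm1 subrr.
have rm : r ⊙ m = idm I.
  apply: mm; rewrite compA rE compBl -compA (proj1 mk') compm0 subr0.
  by rewrite comp1m compm1.
have [N [n nk]] := kernel_exists h'.
have cn := epi_cokernel_of_kernel eh' nk.
have hn : h ⊙ n = 0 by rewrite hE -compA (proj1 nk) compm0.
have [w' w'E] : exists w', w' ⊙ h' = w.
  apply: (cokernel_factor cn); apply: Hw.
    by have := congr1 (comp p1) hn; rewrite /h; comp_simpl; biprod_simpl B.
  have := congr1 (comp p2) hn; rewrite /h; comp_simpl; biprod_simpl B.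
  by move/eqP; rewrite oppr_eq0 => /eqP.
have Yh : w' ⊙ r ⊙ h = w by rewrite hE -compA (compA r) rm comp1m.
by exists (w' ⊙ r ⊙ i1), (- (w' ⊙ r ⊙ i2)); rewrite -Yh /h; comp_solve.
Qed.
End Pushout.

End AbelianFacts.

Section TwoCategory.
Variable A : PreAdditive.
Hypothesis HA : abelian A.
Hypothesis HP : enough_projectives A.

Local Notation arr := (arr A).
Local Notation mor := (@mor A).

Definition zo_arr (P : A) : arr := Arr (0 : hom zo P).
Definition arr_zo (T : A) : arr := Arr (0 : hom T zo).

Lemma inC_arr_zo (T : A) : inC (arr_zo T). Proof. exact: projective_zo. Qed.

Lemma is2cell0 (a b : arr) (f g : mor a b) : m1 f = m1 g -> m0 f = m0 g -> is2cell f g 0.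
Proof. by move=> E1 E0; split; rewrite ?E1 ?E0 subrr ?comp0m ?compm0. Qed.

Lemma faithful_jointly_mono (a b : arr) (f : mor a b) : faithfulM f ->
  forall T (t : hom T (A1 a)), amap a ⊙ t = 0 -> m1 f ⊙ t = 0 -> t = 0.
Proof.
move=> Ff T t at0 ft0; have [P [e [pP ee]]] := HP T.
apply: (epi_comp_eq0 ee).
apply: (Ff (zo_arr P) pP (zeroM _ _) (zeroM _ _) (t ⊙ e) 0).
- by split => /=; rewrite subrr; [rewrite compm0 | rewrite compA at0 comp0m].
- by split; rewrite /= subrr ?compm0 ?comp0m.
- by rewrite compA ft0 comp0m compm0.
Qed.

Lemma cofaithful_jointly_epi (a b : arr) (f : mor a b) : cofaithfulM f ->
  forall T (y : hom (A0 b) T), y ⊙ m0 f = 0 -> y ⊙ amap b = 0 -> y = 0.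
Proof.
move=> Ff T y yf yb.
have := Ff (arr_zo T) (@inC_arr_zo T) (zeroM _ _) (zeroM _ _) y 0; apply.
- by split; rewrite /= subrr ?yb //; apply: hom_to_zo_eq.
- by split; rewrite /= subrr ?comp0m ?compm0.
- by rewrite yf comp0m.
Qed.

Lemma discrete_mono (a : arr) : discrete a -> mono (amap a).
Proof.
move=> D; apply: mono_of_comp0 => T t at0.
by apply: (faithful_jointly_mono D) => //=; rewrite comp0m.
Qed.

Lemma mono_discrete (a : arr) : mono (amap a) -> discrete a.
Proof. by move=> M x _ v w al be [_ H1] [_ H2] _; apply: M; rewrite -H1 -H2. Qed.

Lemma codiscrete_epi (a : arr) : codiscrete a -> epi (amap a).
Proof.
move=> D; apply: epi_of_comp0 => T t ta0.
by apply: (cofaithful_jointly_epi D) => //=; rewrite compm0.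
Qed.

Lemma discrete_coker_equiv : discrete_coker_equivalence A.
Proof.
split=> [a b Ia Ib Da Db Ca ca Cb cb cca ccb|X].
  have mb := discrete_mono Db.
  have kb := mono_kernel_of_cokernel HA mb ccb.
  split=> [f g h E1 E2|h].
    have : cb ⊙ (m0 f - m0 g) = 0 by rewrite compBr -E1 -E2 subrr.
    case/(kernel_factor kb) => al alE.
    exists al; split; last by rewrite /= alE.
    by apply: mb; rewrite compBr !mcomm -compBl -alE compA.
  have [f0 f0E] := Ia _ _ _ (cokernel_epi ccb) (h ⊙ ca).
  have : cb ⊙ (f0 ⊙ amap a) = 0 by rewrite compA f0E -compA (proj1 cca) compm0.
  by case/(kernel_factor kb) => f1 f1E; exists (Mor f1E); rewrite /= f0E.
have [P [e [pP ee]]] := HP X.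
have [K [k kk]] := kernel_exists HA e.
exists (Arr k); split => //; first exact/mono_discrete/(kernel_mono kk).
by exists e; apply: epi_cokernel_of_kernel.
Qed.

Lemma codiscrete_ker_equiv : codiscrete_ker_equivalence A.
Proof.
split=> [a b Ia Ib Da Db Ka ka Kb kb kka kkb|X].
  have ea := codiscrete_epi Da.
  have ca := epi_cokernel_of_kernel HA ea kka.
  split=> [f g h E1 E2|h].
    have : (m1 f - m1 g) ⊙ ka = 0 by rewrite compBl -E1 -E2 subrr.
    case/(cokernel_factor ca) => al alE.
    exists al; split; first by rewrite /= alE.
    by apply: ea; rewrite compBl -!mcomm -compBr -alE compA.
  (* amap a splits since A0 a is projective, so Ka is a retract of A1 a. *)
  have [s sE] := Ia _ _ _ ea (idm _).
  have [r rE] : exists r, ka ⊙ r = idm _ - s ⊙ amap a.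
    by apply: (kernel_factor kka); rewrite compBr compA sE comp1m compm1 subrr.
  have rk : r ⊙ ka = idm _.
    apply: (kernel_mono kka); rewrite compA rE compBl -compA (proj1 kka) compm0 subr0.
    by rewrite comp1m compm1.
  have E : amap b ⊙ (kb ⊙ h ⊙ r) = (0 : hom (A0 a) (A0 b)) ⊙ amap a.
    by rewrite !compA (proj1 kkb) !comp0m.
  by exists (Mor E); rewrite /= -compA rk compm1.
exists (arr_zo X); split; first exact: inC_arr_zo.
  by move=> x _ v w al be _ _ _; apply: hom_from_zo_eq.
exists (idm X); split; first by rewrite compm1.
move=> t g _; exists g; split; first by rewrite comp1m.
by move=> g'; rewrite comp1m.
Qed.

Lemma Z_is_2zero : is_2zero (Z A).
Proof.
split; first exact: projective_zo.
move=> x _; split; split; try by exists (zeroM _ _).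
- move=> f g; exists 0; split; first by split; apply: hom_to_zo_eq.
  by move=> al _; apply: hom_to_zo_eq.
- move=> f g; exists 0; split; first by split; apply: hom_from_zo_eq.
  by move=> al _; apply: hom_from_zo_eq.
Qed.

Section BiproductArr.
Variables (a b : arr).
Variables (W1 W0 : A) (pi1 : hom W1 (A1 a)) (pi2 : hom W1 (A1 b)) (io1 : hom (A1 a) W1)
  (io2 : hom (A1 b) W1) (r1 : hom W0 (A0 a)) (r2 : hom W0 (A0 b)) (j1 : hom (A0 a) W0)
  (j2 : hom (A0 b) W0).
Hypotheses (B1 : is_biproduct pi1 pi2 io1 io2) (B0 : is_biproduct r1 r2 j1 j2).

Definition biprodArr : arr := Arr (j1 ⊙ amap a ⊙ pi1 + j2 ⊙ amap b ⊙ pi2).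
Ltac biprods_simpl := repeat progress (biprod_simpl B0; biprod_simpl B1); try reflexivity.

Lemma biprodArr_p1_subproof : amap a ⊙ pi1 = r1 ⊙ amap biprodArr.
Proof. by rewrite /=; comp_simpl; biprods_simpl. Qed.
Lemma biprodArr_p2_subproof : amap b ⊙ pi2 = r2 ⊙ amap biprodArr.
Proof. by rewrite /=; comp_simpl; biprods_simpl. Qed.
Lemma biprodArr_i1_subproof : amap biprodArr ⊙ io1 = j1 ⊙ amap a.
Proof. by rewrite /=; comp_simpl; biprods_simpl. Qed.
Lemma biprodArr_i2_subproof : amap biprodArr ⊙ io2 = j2 ⊙ amap b.
Proof. by rewrite /=; comp_simpl; biprods_simpl. Qed.

Definition biprodM_p1 : mor biprodArr a := @Mor _ biprodArr a r1 pi1 biprodArr_p1_subproof.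
Definition biprodM_p2 : mor biprodArr b := @Mor _ biprodArr b r2 pi2 biprodArr_p2_subproof.
Definition biprodM_i1 : mor a biprodArr := @Mor _ a biprodArr j1 io1 biprodArr_i1_subproof.
Definition biprodM_i2 : mor b biprodArr := @Mor _ b biprodArr j2 io2 biprodArr_i2_subproof.

Lemma biprodArr_2product : is_2product biprodM_p1 biprodM_p2.
Proof.
move=> x Ix; split.
- by move=> v v' ga ga' _ _ E1 E2; apply: (biprod_eq_proj B1).
- move=> v v' be1 be2 [/= H11 H10] [/= H21 H20].
  exists (io1 ⊙ be1 + io2 ⊙ be2); split; rewrite /=; comp_simpl; biprods_simpl.
  split.
    apply: (biprod_eq_proj B1); comp_simpl; biprods_simpl.
      by rewrite H11; comp_simpl.
    by rewrite H21; comp_simpl.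
  apply: (biprod_eq_proj B0); rewrite /=; comp_simpl; biprods_simpl.
    by rewrite H10; comp_simpl.
  by rewrite H20; comp_simpl.
- move=> w1 w2.
  have E : amap biprodArr ⊙ (io1 ⊙ m1 w1 + io2 ⊙ m1 w2)
         = (j1 ⊙ m0 w1 + j2 ⊙ m0 w2) ⊙ amap x.
    by rewrite /=; comp_simpl; biprods_simpl; rewrite -!compA !mcomm; comp_simpl.
  by exists (Mor E), 0, 0; split; apply: is2cell0; rewrite /=; comp_simpl; biprods_simpl.
Qed.

Lemma biprodArr_2coproduct : is_2coproduct biprodM_i1 biprodM_i2.
Proof.
move=> x Ix; split.
- by move=> v v' ga ga' _ _ E1 E2; apply: (biprod_eq_inj B0).
- move=> v v' be1 be2 [/= H11 H10] [/= H21 H20].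
  exists (be1 ⊙ r1 + be2 ⊙ r2); split; rewrite /=; comp_simpl; biprods_simpl.
  split.
    apply: (biprod_eq_inj B1); rewrite /=; comp_simpl; biprods_simpl.
      by rewrite -H11; comp_simpl.
    by rewrite -H21; comp_simpl.
  apply: (biprod_eq_inj B0); comp_simpl; biprods_simpl.
    by rewrite H10; comp_simpl.
  by rewrite H20; comp_simpl.
- move=> w1 w2.
  have E : amap x ⊙ (m1 w1 ⊙ pi1 + m1 w2 ⊙ pi2)
         = (m0 w1 ⊙ r1 + m0 w2 ⊙ r2) ⊙ amap biprodArr.
    by rewrite /=; comp_simpl; biprods_simpl; rewrite !mcomm; comp_simpl.
  by exists (@Mor _ biprodArr x _ _ E), 0, 0; split; apply: is2cell0; rewrite /=; comp_simpl; biprods_simpl.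
Qed.

Lemma biprodArr_2biproduct : is_2biproduct biprodM_p1 biprodM_p2 biprodM_i1 biprodM_i2.
Proof.
split; first by split; [exact: biprodArr_2product | exact: biprodArr_2coproduct].
all: by exists 0; apply: is2cell0; rewrite /=; biprods_simpl.
Qed.
End BiproductArr.

Lemma arr_two_additive : two_additive A.
Proof.
split=> [|a b Ia Ib]; first exact: Z_is_2zero.
have [W1 [pi1 [pi2 [io1 [io2 B1]]]]] := biprod_exists HA (A1 a) (A1 b).
have [W0 [r1 [r2 [j1 [j2 B0]]]]] := biprod_exists HA (A0 a) (A0 b).
eexists _, _, _, _, _; split; last exact: (biprodArr_2biproduct B1 B0).
exact: (biprod_projective B0 Ia Ib).
Qed.

Lemma pullback_from_A1 (a b : arr) (f : mor a b) (Q : A) (q1 : hom Q (A0 a))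
    (q2 : hom Q (A1 b)) : is_pullback (m0 f) (amap b) q1 q2 ->
  exists t, q1 ⊙ t = amap a /\ q2 ⊙ t = m1 f.
Proof. by case=> _ U _; apply: U; rewrite mcomm. Qed.

Lemma pushout_to_A0 (a b : arr) (f : mor a b) (C1 : A) (inc1 : hom (A0 a) C1)
    (inc2 : hom (A1 b) C1) : is_pushout (amap a) (m1 f) inc1 inc2 ->
  exists cc, cc ⊙ inc1 = m0 f /\ cc ⊙ inc2 = amap b.
Proof. by case=> _ U _; apply: U; rewrite mcomm. Qed.

Section Kernel.
Variables (a b : arr) (f : mor a b).
Variables (Q : A) (q1 : hom Q (A0 a)) (q2 : hom Q (A1 b)).
Hypothesis PBQ : is_pullback (m0 f) (amap b) q1 q2.
Variables (P : A) (e : hom P Q).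
Hypothesis ee : epi e.
Variables (t : hom (A1 a) Q).
Hypotheses (ht1 : q1 ⊙ t = amap a) (ht2 : q2 ⊙ t = m1 f).
Variables (K1 : A) (r1 : hom K1 P) (r2 : hom K1 (A1 a)).
Hypothesis PBK : is_pullback e t r1 r2.

Definition kerArr : arr := Arr r1.
Lemma kerM_subproof : amap a ⊙ r2 = (q1 ⊙ e) ⊙ amap kerArr.
Proof. by case: PBK => C _ _; rewrite /= -compA C compA ht1. Qed.
Definition kerM : mor kerArr a := @Mor _ kerArr a _ _ kerM_subproof.
Definition ker_cell : hom (A0 kerArr) (A1 b) := q2 ⊙ e.

Lemma kerArr_2kernel : is_2kernel f kerM ker_cell.
Proof.
case: PBQ => CQ UQ MQ; case: PBK => CK UK MK.
split.
  split => /=; rewrite subr0; first by rewrite -compA CK compA ht2.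
  by rewrite /ker_cell !compA CQ.
move=> x Ix; split.
- by move=> v v' ga ga' [_ H1] [_ H2] E; apply: MK => //; rewrite -H1 -H2.
- move=> v v' be [H1 H0] /= E.
  have E' : e ⊙ (m0 v - m0 v') = t ⊙ be.
    apply: MQ; first by rewrite (compA q1 t) ht1 -H0 /=; comp_solve.
    by rewrite (compA q2 t) ht2; move: E; rewrite /ker_cell; comp_simpl => ->; zmod_solve.
  have [ga [g1 g2]] := UK _ _ _ E'.
  exists ga; split => //; split => /=; last by rewrite g1.
  apply: MK; last by rewrite compBr compA g2; move: H1 => /= ->.
  have mv := mcomm v; have mv' := mcomm v'; rewrite /= in mv mv'.
  by rewrite compBr mv mv' compA g1 compBl.
- move=> w ph [/= H1 H0]; rewrite subr0 in H1; rewrite subr0 in H0.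
  have [y [y1 y2]] := UQ _ _ _ H0.
  have [v0 v0E] := Ix _ _ _ ee y.
  have E2 : e ⊙ (v0 ⊙ amap x) = t ⊙ m1 w.
    apply: MQ; first by rewrite (compA e) v0E compA y1 compA ht1 mcomm.
    by rewrite (compA e) v0E compA y2 compA ht2 H1.
  have [v1 [v11 v12]] := UK _ _ _ E2.
  have vc : amap kerArr ⊙ v1 = v0 ⊙ amap x by [].
  exists (@Mor _ x kerArr _ _ vc), 0; split.
    by apply: is2cell0 => //=; rewrite -compA v0E y1.
  by rewrite /= compm0 add0r /ker_cell -compA v0E y2.
Qed.
End Kernel.

Lemma arr_has_2kernels : has_2kernels A.
Proof.
move=> a b f Ia Ib.
have [Q [q1 [q2 PBQ]]] := pullback_exists HA (m0 f) (amap b).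
have [P [e [pP ee]]] := HP Q.
have [t [ht1 ht2]] := pullback_from_A1 PBQ.
have [K1 [r1 [r2 PBK]]] := pullback_exists HA e t.
exists (kerArr r1), (kerM ht1 PBK), (ker_cell q2 e r1); split => //.
exact: (kerArr_2kernel PBQ ee ht1 ht2 PBK).
Qed.

Section Cokernel.
Variables (a b : arr) (f : mor a b).
Variables (C1 : A) (inc1 : hom (A0 a) C1) (inc2 : hom (A1 b) C1).
Hypothesis PO : is_pushout (amap a) (m1 f) inc1 inc2.
Variable (cc : hom C1 (A0 b)).
Hypotheses (hc1 : cc ⊙ inc1 = m0 f) (hc2 : cc ⊙ inc2 = amap b).

Definition cokerArr : arr := Arr cc.
Lemma cokerM_subproof : amap cokerArr ⊙ inc2 = idm (A0 b) ⊙ amap b.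
Proof. by rewrite /= hc2 comp1m. Qed.
Definition cokerM : mor b cokerArr := @Mor _ b cokerArr _ _ cokerM_subproof.

Lemma cokerArr_2cokernel : is_2cokernel f cokerM inc1.
Proof.
case: PO => CP UP MP.
split; first by split => /=; rewrite subr0 ?comp1m.
move=> x Ix; split.
- by move=> v v' ga ga' _ _; rewrite /= !compm1.
- move=> v v' be [/= H1 H0] /= E.
  exists be; split; last by rewrite compm1.
  split => /=; last by rewrite -H0 !compm1.
  by apply: MP; rewrite compBl -compA ?hc1 ?hc2 ?H1 // E; zmod_solve.
- move=> w ph [/= H1 H0]; rewrite subr0 in H1; rewrite subr0 in H0.
  have [v1 [v11 v12]] := UP _ _ _ (esym H1).
  have vc : amap x ⊙ v1 = m0 w ⊙ amap cokerArr.
    by apply: MP; rewrite -!compA /= ?hc1 ?hc2 ?v11 ?v12 ?mcomm.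
  exists (@Mor _ cokerArr x _ _ vc), 0; split; first by apply: is2cell0; rewrite /= ?compm1.
  by rewrite /= v11 comp0m add0r.
Qed.
End Cokernel.

Lemma arr_has_2cokernels : has_2cokernels A.
Proof.
move=> a b f Ia Ib.
have [C1 [inc1 [inc2 PO]]] := pushout_exists HA (amap a) (m1 f).
have [cc [hc1 hc2]] := pushout_to_A0 PO.
exists (cokerArr cc), (cokerM hc2), inc1; split => //.
exact: (cokerArr_2cokernel PO hc1 hc2).
Qed.

Section Pip.
Variables (a b : arr) (f : mor a b).
Variables (K : A) (kK : hom K (A1 a)).
Hypotheses (mK : mono kK) (aK : amap a ⊙ kK = 0) (fK : m1 f ⊙ kK = 0)
  (UK : forall T (xi : hom T (A1 a)), amap a ⊙ xi = 0 -> m1 f ⊙ xi = 0 ->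
        exists xi', kK ⊙ xi' = xi).
Variables (P : A) (e : hom P K) (ee : epi e) (P1 : A) (pk : hom P1 P).
Hypothesis kpk : is_kernel e pk.

Definition pipArr : arr := Arr pk.
Definition pip_cell : hom (A0 pipArr) (A1 a) := kK ⊙ e.

Lemma pipArr_pip : is_pip f pip_cell.
Proof.
have mpk := kernel_mono kpk.
split.
- split => /=; rewrite subrr /pip_cell; first by rewrite -compA (proj1 kpk) compm0.
  by rewrite compA aK comp0m.
- by rewrite /pip_cell compA fK comp0m.
move=> x Ix; split.
- by move=> v v' ga ga' [_ H1] [_ H2]; apply: mpk; rewrite -H1 -H2.
- move=> v v' E.
  have : e ⊙ (m0 v - m0 v') = 0.
    apply: (mono_comp_eq0 mK); rewrite !compBr !compA; move: E; rewrite /pip_cell => ->.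
    by rewrite subrr.
  case/(kernel_factor kpk) => ga gaE.
  exists ga; split => /=; last by rewrite gaE.
  apply: mpk; have mv := mcomm v; have mv' := mcomm v'; rewrite /= in mv mv'.
  by rewrite compBr mv mv' compA gaE compBl.
- move=> xi [/= H1 H0] f0; rewrite subrr in H1; rewrite subrr in H0.
  have [xi' xiE] := UK (esym H0) f0.
  have [v0 v0E] := Ix _ _ _ ee xi'.
  have : e ⊙ (v0 ⊙ amap x) = 0.
    by rewrite compA v0E; apply: (mono_comp_eq0 mK); rewrite compA xiE -H1.
  case/(kernel_factor kpk) => v1 v1E.
  by exists (@Mor _ x pipArr _ _ v1E); rewrite /pip_cell /= -compA v0E.
Qed.
End Pip.

Lemma arr_has_pips : has_pips A.
Proof.
move=> a b f Ia Ib.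
have [K [kK [mK aK fK UK]]] := joint_kernel HA (amap a) (m1 f).
have [P [e [pP ee]]] := HP K.
have [P1 [pk kpk]] := kernel_exists HA e.
exists (pipArr pk), (pip_cell kK e pk); split => //.
exact: pipArr_pip.
Qed.

Section Copip.
Variables (a b : arr) (f : mor a b).
Variables (Cq : A) (c : hom (A0 b) Cq).
Hypotheses (ec : epi c) (cb : c ⊙ amap b = 0) (cf : c ⊙ m0 f = 0)
  (UC : forall T (xi : hom (A0 b) T), xi ⊙ amap b = 0 -> xi ⊙ m0 f = 0 ->
        exists xi', xi' ⊙ c = xi).

Lemma arr_zo_copip : is_copip f (c : hom (A0 b) (A1 (arr_zo Cq))).
Proof.
split => //; first by split => /=; rewrite subrr //; apply: hom_to_zo_eq.
move=> x Ix; split.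
- by move=> v v' ga ga' _ _; apply: hom_from_zo_eq.
- move=> v v' E; exists 0; split => /=; last exact: hom_from_zo_eq.
  by rewrite compm0; apply/eqP; rewrite subr_eq0; apply/eqP/ec.
- move=> xi [/= H1 H0] f0; rewrite subrr in H1; rewrite subrr in H0.
  have [v1 v1E] := UC (esym H1) f0.
  have vc : amap x ⊙ v1 = (0 : hom (A0 (arr_zo Cq)) (A0 x)) ⊙ amap (arr_zo Cq).
    by rewrite comp0m; apply: (epi_comp_eq0 ec); rewrite -compA v1E -H0.
  by exists (@Mor _ (arr_zo Cq) x _ _ vc).
Qed.
End Copip.

Lemma arr_has_copips : has_copips A.
Proof.
move=> a b f Ia Ib.
have [C [c [ec cb cf UC _]]] := joint_cokernel HA (amap b) (m0 f).
exists (arr_zo C), c; split; first exact: inC_arr_zo.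
exact: arr_zo_copip.
Qed.

Section Root.
Variables (a b : arr) (al : hom (A0 a) (A1 b)).
Variables (Ka : A) (ka : hom Ka (A0 a)).
Hypothesis kka : is_kernel al ka.
Variable (a' : hom (A1 a) Ka).
Hypothesis a'E : ka ⊙ a' = amap a.
Variables (P : A) (e : hom P Ka) (ee : epi e).
Variables (R1 : A) (s1 : hom R1 P) (s2 : hom R1 (A1 a)).
Hypothesis PB : is_pullback e a' s1 s2.

Definition rootArr : arr := Arr s1.
Lemma rootM_subproof : amap a ⊙ s2 = (ka ⊙ e) ⊙ amap rootArr.
Proof. by case: PB => C _ _; rewrite /= -compA C compA a'E. Qed.
Definition rootM : mor rootArr a := @Mor _ rootArr a _ _ rootM_subproof.

Lemma rootArr_root : is_root al rootM.
Proof.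
have mka := kernel_mono kka.
case: PB => CP UP MP.
split; first by rewrite /= compA (proj1 kka) comp0m.
move=> x Ix; split.
- by move=> v v' ga ga' [_ H1] [_ H2] E; apply: MP => //; rewrite -H1 -H2.
- move=> v v' be [H1 H0].
  have E' : e ⊙ (m0 v - m0 v') = a' ⊙ be.
    by apply: mka; rewrite (compA ka a') a'E -H0 /=; comp_solve.
  have [ga [g1 g2]] := UP _ _ _ E'.
  exists ga; split => //; split => /=; last by rewrite g1.
  apply: MP; last by rewrite compBr compA g2; move: H1 => /= ->.
  have mv := mcomm v; have mv' := mcomm v'; rewrite /= in mv mv'.
  by rewrite compBr mv mv' compA g1 compBl.
- move=> w aw.
  have [w0 w0E] := kernel_factor kka aw.
  have [v0 v0E] := Ix _ _ _ ee w0.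
  have E2 : e ⊙ (v0 ⊙ amap x) = a' ⊙ m1 w.
    by apply: mka; rewrite (compA ka a') a'E mcomm (compA e) v0E compA w0E.
  have [v1 [v11 v12]] := UP _ _ _ E2.
  have vc : amap rootArr ⊙ v1 = v0 ⊙ amap x by [].
  exists (@Mor _ x rootArr _ _ vc), 0.
  by apply: is2cell0 => //=; rewrite -compA v0E.
Qed.
End Root.

Lemma arr_has_roots : has_roots A.
Proof.
move=> a b al Ia Ib [/= H1 _]; rewrite subrr in H1.
have [Ka [ka kka]] := kernel_exists HA al.
have [a' a'E] := kernel_factor kka (esym H1).
have [P [e [pP ee]]] := HP Ka.
have [R1 [s1 [s2 PB]]] := pullback_exists HA e a'.
exists (rootArr s1), (rootM a'E PB); split => //.
exact: (rootArr_root kka a'E ee PB).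
Qed.

Section Coroot.
Variables (a b : arr) (al : hom (A0 a) (A1 b)).
Variables (Ca : A) (ca : hom (A1 b) Ca).
Hypothesis cca : is_cokernel al ca.
Variable (b' : hom Ca (A0 b)).
Hypothesis b'E : b' ⊙ ca = amap b.

Definition corootArr : arr := Arr b'.
Lemma corootM_subproof : amap corootArr ⊙ ca = idm (A0 b) ⊙ amap b.
Proof. by rewrite /= b'E comp1m. Qed.
Definition corootM : mor b corootArr := @Mor _ b corootArr _ _ corootM_subproof.

Lemma corootArr_coroot : is_coroot al corootM.
Proof.
have eca := cokernel_epi cca.
split; first exact: (proj1 cca).
move=> x Ix; split.
- by move=> v v' ga ga' _ _; rewrite /= !compm1.
- move=> v v' be [/= H1 H0].
  exists be; split; last by rewrite compm1.
  split => /=; last by rewrite -H0 !compm1.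
  by apply: eca; rewrite compBl -compA b'E H1.
- move=> w wa.
  have [v1 v1E] := cokernel_factor cca wa.
  have vc : amap x ⊙ v1 = m0 w ⊙ amap corootArr.
    by apply: eca; rewrite -!compA /= v1E b'E mcomm.
  exists (@Mor _ corootArr x _ _ vc), 0.
  by apply: is2cell0; rewrite /= ?compm1.
Qed.
End Coroot.

Lemma arr_has_coroots : has_coroots A.
Proof.
move=> a b al Ia Ib [_ /= H0]; rewrite subrr in H0.
have [Ca [ca cca]] := cokernel_exists HA al.
have [b' b'E] := cokernel_factor cca (esym H0).
exists (corootArr b'), (corootM b'E); split => //.
exact: (corootArr_coroot cca b'E).
Qed.

(* Composing with a comparison s' : cs -> c the other way gives a 2-cell
   s' s => id, so m1 s is monic modulo amap c. *)
Lemma two_cokernel_comparison (a b : arr) (f : mor a b)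
    (c : arr) (q : mor b c) (ze : hom (A0 a) (A1 c)) (Ic : inC c)
    (CK : is_2cokernel f q ze)
    (cs : arr) (qs : mor b cs) (zs : hom (A0 a) (A1 cs)) (Ics : inC cs)
    (CKs : is_2cokernel f qs zs) :
  exists (s : mor c cs) th,
    [/\ is2cell (compM s q) qs th, m1 s ⊙ ze = th ⊙ m0 f + zs &
        forall T (X : hom T (A1 c)), amap c ⊙ X = 0 -> m1 s ⊙ X = 0 -> X = 0].
Proof.
case: (CK) => Zc CKu; case: (CKs) => Zs CKsu.
have [_ CK2 _] := CKu c Ic.
have [_ _ CK3] := CKu cs Ics; have [s [th [Hth Eth]]] := CK3 qs zs Zs.
have [_ _ CKs3] := CKsu c Ic; have [s' [th' [Hth' Eth']]] := CKs3 q ze Zc.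
have Hcell : is2cell (compM (compM s' s) q) (compM (idM c) q) (m1 s' ⊙ th + th').
  split; first by lin (congrD (m1 s' <| Hth.1) Hth'.1).
  by lin (congrD (congrD (m0 s' <| Hth.2) Hth'.2) (congrN (mcomm s' |> th))).
have Hcond : m1 (compM s' s) ⊙ ze = (m1 s' ⊙ th + th') ⊙ m0 f + m1 (idM c) ⊙ ze.
  by lin (congrD (m1 s' <| Eth) Eth').
have [mu [Hmu _]] := CK2 _ _ _ Hcell Hcond.
exists s, th; split => // T X D2 D3.
by lin (congrD (congrD (m1 s' <| D3) (congrN (Hmu.1 |> X))) (congrN (mu <| D2))).
Qed.

Lemma two_kernel_comparison (a b : arr) (f : mor a b)
    (k : arr) (u : mor k a) (ka : hom (A0 k) (A1 b)) (Ik : inC k)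
    (KK : is_2kernel f u ka)
    (ks : arr) (us : mor ks a) (kas : hom (A0 ks) (A1 b)) (Iks : inC ks)
    (KKs : is_2kernel f us kas) :
  exists (s : mor ks k) th,
    [/\ is2cell (compM u s) us th, ka ⊙ m0 s = m1 f ⊙ th + kas &
        forall T (X : hom (A0 k) T), X ⊙ amap k = 0 -> X ⊙ m0 s = 0 -> X = 0].
Proof.
case: (KK) => Zk KKu; case: (KKs) => Zs KKsu.
have [_ KK2 _] := KKu k Ik.
have [_ _ KK3] := KKu ks Iks; have [s [th [Hth Eth]]] := KK3 us kas Zs.
have [_ _ KKs3] := KKsu k Ik; have [s' [th' [Hth' Eth']]] := KKs3 u ka Zk.
have Hcell : is2cell (compM u (compM s s')) (compM u (idM k)) (th ⊙ m0 s' + th').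
  split; last by lin (congrD (Hth.2 |> m0 s') Hth'.2).
  by lin (congrD (congrD (Hth.1 |> m1 s') Hth'.1) (th <| mcomm s')).
have Hcond : ka ⊙ m0 (compM s s') = m1 f ⊙ (th ⊙ m0 s' + th') + ka ⊙ m0 (idM k).
  by lin (congrD (Eth |> m0 s') Eth').
have [mu [Hmu _]] := KK2 _ _ _ Hcell Hcond.
exists s, th; split => // T X D1 D3.
by lin (congrD (congrD (D3 |> m0 s') (congrN (X <| Hmu.2))) (congrN (D1 |> mu))).
Qed.

Lemma two_kernel_transfer (a b : arr) (f : mor a b) (Ff : faithfulM f)
    (cs : arr) (qs : mor b cs) (zs : hom (A0 a) (A1 cs)) (Ics : inC cs)
    (CKs : is_2cokernel f qs zs) (KKs : is_2kernel qs f zs)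
    (c : arr) (q : mor b c) (ze : hom (A0 a) (A1 c)) (Ic : inC c)
    (CK : is_2cokernel f q ze) : is_2kernel q f ze.
Proof.
have [s [th [Hth Eth s_mono]]] := two_cokernel_comparison Ic CK Ics CKs.
have Zc := proj1 CK; split => // x Ix.
have [_ KKs2 KKs3] := (proj2 KKs) x Ix; split.
- by move=> v v' ga ga' H1 H2 E; apply: (Ff _ Ix _ _ _ _ H1 H2 E).
- move=> v v' be Hbe E; apply: (KKs2 _ _ _ Hbe).
  lin (congrD (congrD (congrD (m1 s <| E) (congrN (Eth |> m0 v)))
    (congrD (Eth |> m0 v') (Hth.1 |> be))) (congrN (th <| Hbe.2))).
- move=> w ph Hph.
  have Hph' : is2cell (compM qs w) (zeroM x cs) (m1 s ⊙ ph - th ⊙ m0 w).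
    split.
      by lin (congrD (congrD (congrN (Hth.1 |> m1 w)) (m1 s <| Hph.1)) (congrN (th <| mcomm w))).
    by lin (congrD (congrD (congrN (Hth.2 |> m0 w)) (m0 s <| Hph.2)) (congrN (mcomm s |> ph))).
  have [v [be [Hvb Ev]]] := KKs3 w _ Hph'.
  exists v, be; split => //.
  have X0 : ze ⊙ m0 v - m1 q ⊙ be - ph = 0.
    apply: s_mono.
      by lin (congrD (congrD (congrN (Zc.2 |> m0 v)) (congrN (mcomm q |> be)))
        (congrD (m0 q <| Hvb.2) Hph.2)).
    by lin (congrD (congrD (Eth |> m0 v) (congrN (Hth.1 |> be))) (congrD Ev (th <| Hvb.2))).
  by lin X0.
Qed.

Lemma two_cokernel_transfer (a b : arr) (f : mor a b) (Fc : cofaithfulM f)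
    (ks : arr) (us : mor ks a) (kas : hom (A0 ks) (A1 b)) (Iks : inC ks)
    (KKs : is_2kernel f us kas) (CKs : is_2cokernel us f kas)
    (k : arr) (u : mor k a) (ka : hom (A0 k) (A1 b)) (Ik : inC k)
    (KK : is_2kernel f u ka) : is_2cokernel u f ka.
Proof.
have [s [th [Hth Eth s_epi]]] := two_kernel_comparison Ik KK Iks KKs.
have Zk := proj1 KK; split => // x Ix.
have [_ CKs2 CKs3] := (proj2 CKs) x Ix; split.
- by move=> v v' ga ga' H1 H2 E; apply: (Fc _ Ix _ _ _ _ H1 H2 E).
- move=> v v' be Hbe E; apply: (CKs2 _ _ _ Hbe).
  lin (congrD (congrD (congrN (m1 v <| Eth)) (m1 v' <| Eth))
    (congrD (E |> m0 s) (congrD (congrN (Hbe.1 |> th)) (be <| Hth.2)))).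
- move=> w ph Hph.
  have Hph' : is2cell (compM w us) (zeroM ks x) (ph ⊙ m0 s - m1 w ⊙ th).
    split.
      by lin (congrD (congrD (congrN (m1 w <| Hth.1)) (Hph.1 |> m1 s)) (ph <| mcomm s)).
    by lin (congrD (congrD (congrN (m0 w <| Hth.2)) (Hph.2 |> m0 s)) (mcomm w |> th)).
  have [v [be [Hvb Ev]]] := CKs3 w _ Hph'.
  exists v, be; split => //.
  have X0 : m1 v ⊙ ka - be ⊙ m0 u - ph = 0.
    apply: s_epi.
      by lin (congrD (congrD (congrN (m1 v <| Zk.1)) (Hvb.1 |> m1 u))
        (congrD (be <| mcomm u) Hph.1)).
    by lin (congrD (congrD (m1 v <| Eth) Ev) (congrD (congrN (be <| Hth.2)) (Hvb.1 |> th))).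
  by lin X0.
Qed.

Section FaithfulCokernel.
Variables (a b : arr) (f : mor a b).
Hypothesis Ff : faithfulM f.
Variables (C1 : A) (inc1 : hom (A0 a) C1) (inc2 : hom (A1 b) C1).
Hypothesis PO : is_pushout (amap a) (m1 f) inc1 inc2.
Variable (cc : hom C1 (A0 b)).
Hypotheses (hc1 : cc ⊙ inc1 = m0 f) (hc2 : cc ⊙ inc2 = amap b).

Lemma cokerArr_2kernel : is_2kernel (cokerM hc2) f inc1.
Proof.
have JM := faithful_jointly_mono Ff.
split; first exact: (proj1 (cokerArr_2cokernel PO hc1 hc2)).
move=> x Ix; split.
- by move=> v v' ga ga' H1 H2 E; apply: (Ff Ix H1 H2 E).
- move=> v v' be [/= H1 H0] /= E.
  have E' : inc1 ⊙ (m0 v - m0 v') = inc2 ⊙ be by lin E.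
  have [ga [g1 g2]] := pushout_pair_factor HA PO JM E'.
  exists ga; split => //; split => //=.
  apply: subr0_eq; apply: JM.
    by lin (congrD (congrD (mcomm v) (congrN (mcomm v'))) (congrN (g1 |> amap x))).
  by lin (congrD H1 (congrN (g2 |> amap x))).
- move=> w ph [/= H1 H0].
  have [u [v' phE]] := pushout_projective_lift HA PO ph Ix.
  have E2 : inc1 ⊙ (u ⊙ amap x) = inc2 ⊙ (m1 w - v' ⊙ amap x).
    by lin (congrD (phE |> amap x) (congrN H1)).
  have [v1 [g1 g2]] := pushout_pair_factor HA PO JM E2.
  exists (@Mor _ x a _ _ g1), (- v'); split; last by rewrite /=; lin phE.
  split => /=; first by lin g2.
  by lin (congrD (congrD (congrN H0) (cc <| phE))
    (congrN (congrD (hc1 |> u) (hc2 |> v')))).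
Qed.
End FaithfulCokernel.

Section CofaithfulKernel.
Variables (a b : arr) (f : mor a b).
Hypothesis Ib : inC b.
Hypothesis Fc : cofaithfulM f.
Variables (Q : A) (q1 : hom Q (A0 a)) (q2 : hom Q (A1 b)).
Hypothesis PBQ : is_pullback (m0 f) (amap b) q1 q2.
Variables (P : A) (e : hom P Q).
Hypothesis ee : epi e.
Variables (t : hom (A1 a) Q).
Hypotheses (ht1 : q1 ⊙ t = amap a) (ht2 : q2 ⊙ t = m1 f).
Variables (K1 : A) (r1 : hom K1 P) (r2 : hom K1 (A1 a)).
Hypothesis PBK : is_pullback e t r1 r2.

(* The 2-cell ph on the kernel factors through the cover e, and the
   splitting of the pullback over the projective A0 b yields the morphism. *)
Lemma kerArr_2cokernel : is_2cokernel (kerM ht1 PBK) f (ker_cell q2 e r1).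
Proof.
have JE := cofaithful_jointly_epi Fc.
have CK : e ⊙ r1 = t ⊙ r2 by case: PBK.
split; first exact: (proj1 (kerArr_2kernel PBQ ee ht1 ht2 PBK)).
move=> x Ix; split.
- by move=> v v' ga ga' H1 H2 E; apply: (Fc Ix H1 H2 E).
- move=> v v' be [/= H1 H0] /= E.
  have E' : be ⊙ q1 = (m1 v - m1 v') ⊙ q2 by apply: ee; lin (congrN E).
  have [ga [g1 g2]] := pullback_copair_factor HA PBQ JE E'.
  exists ga; split => //; split => //=.
  apply: subr0_eq; apply: JE; first by lin (congrD H0 (congrN (amap x <| g1))).
  by lin (congrD (congrD (congrN (mcomm v)) (mcomm v')) (congrN (amap x <| g2))).
- move=> w ph [/= H1 H0].
  have [N [n kn]] := kernel_exists HA e.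
  have [z [z1 z2]] : exists z, r1 ⊙ z = n /\ r2 ⊙ z = 0.
    by case: PBK => _ U _; apply: U; rewrite (proj1 kn) compm0.
  have [ph' ph'E] : exists ph', ph' ⊙ e = ph.
    apply: (cokernel_factor (epi_cokernel_of_kernel HA ee kn)).
    by lin (congrD (congrD (congrN (ph <| z1)) (congrN (H1 |> z))) (m1 w <| z2)).
  have wq : m0 w ⊙ q1 = amap x ⊙ ph'.
    by apply: ee; lin (congrD H0 (congrN (amap x <| ph'E))).
  have wt : m1 w = ph' ⊙ t.
    apply: (pullback_epi HA PBK ee).
    by lin (congrD (congrD H1 (congrN (ph'E |> r1))) (ph' <| CK)).
  have [u' [v1 uvE]] := projective_pullback_split HA PBQ JE ph' Ib.
  have E3 : (m0 w - amap x ⊙ u') ⊙ q1 = (amap x ⊙ v1) ⊙ q2.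
    by lin (congrD wq (congrN (amap x <| uvE))).
  have [v0 [v0f v0b]] := pullback_copair_factor HA PBQ JE E3.
  have vc : amap x ⊙ v1 = v0 ⊙ amap b by rewrite v0b.
  exists (@Mor _ b x _ _ vc), (- u'); split; last by rewrite /=; lin (congrD (uvE |> e) ph'E).
  split => /=; last by lin v0f.
  by lin (congrD (congrD (congrN wt) (uvE |> t)) (congrN (congrD (u' <| ht1) (v1 <| ht2)))).
Qed.
End CofaithfulKernel.

(* A fully faithful f presents A1 a itself as the pullback of m0 f and amap b:
   t is monic by faithfulness and epic by fullness, tested on 0 -> P. *)
Lemma fully_faithful_pullback_iso (a b : arr) (f : mor a b) : fully_faithfulM f ->
  forall (Q : A) (q1 : hom Q (A0 a)) (q2 : hom Q (A1 b)) (t : hom (A1 a) Q),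
  is_pullback (m0 f) (amap b) q1 q2 -> q1 ⊙ t = amap a -> q2 ⊙ t = m1 f ->
  exists ti, ti ⊙ t = idm (A1 a) /\ t ⊙ ti = idm Q.
Proof.
move=> [Ff Fu] Q q1 q2 t [CQ _ MQ] ht1 ht2.
apply: mono_epi_iso => //.
  apply: mono_of_comp0 => T s ts; apply: (faithful_jointly_mono Ff).
    by rewrite -ht1 -compA ts compm0.
  by rewrite -ht2 -compA ts compm0.
have [P [e [pP ee]]] := HP Q.
have vc : amap a ⊙ (0 : hom zo (A1 a)) = (q1 ⊙ e) ⊙ amap (zo_arr P) by rewrite /= !compm0.
pose v := @Mor _ (zo_arr P) a _ _ vc.
have Hc : is2cell (compM f v) (compM f (zeroM (zo_arr P) a)) (q2 ⊙ e).
  split => /=; first by rewrite !compm0 subrr.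
  by rewrite compm0 subr0 !compA CQ.
have [al [[_ H0] E]] := Fu (zo_arr P) pP _ _ _ Hc.
have te : t ⊙ al = e.
  by apply: MQ; rewrite compA ?ht1 ?ht2 ?E //; move: H0 => /=; rewrite subr0.
apply: epi_of_comp0 => T g gt; apply: (epi_comp_eq0 ee).
by rewrite -te compA gt comp0m.
Qed.

Lemma fully_faithful_root_of_copip (a b : arr) (f : mor a b) : fully_faithfulM f ->
  forall c (ps : hom (A0 b) (A1 c)), inC c -> is_copip f ps -> is_root ps f.
Proof.
move=> FF c ps Ic [Zc cf CPu]; have [Ff Fu] := FF.
split => // x Ix; split.
- by move=> v v' ga ga' H1 H2 E; apply: (Ff _ Ix _ _ _ _ H1 H2 E).
- by move=> v v' be Hbe; apply: (Fu _ Ix _ _ _ Hbe).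
move=> w pw.
(* compare ps with the copip Cq -> 0 to lift m0 w along (amap b, m0 f) *)
have [Cq [cs [ecs csb csf UCs LCs]]] := joint_cokernel HA (amap b) (m0 f).
have [Zs _ _] := arr_zo_copip ecs csb csf UCs.
have [_ _ CP3] := CPu (arr_zo Cq) (@inC_arr_zo Cq).
have [v1' v1E] := CP3 cs Zs csf.
have cw : cs ⊙ m0 w = 0 by rewrite -v1E -compA pw compm0.
have [y1 [y0 yE]] := LCs _ _ Ix cw.
have [Q [q1 [q2 PBQ]]] := pullback_exists HA (m0 f) (amap b).
have [t [ht1 ht2]] := pullback_from_A1 PBQ.
have [ti [tit tti]] := fully_faithful_pullback_iso FF PBQ ht1 ht2.
have Ez : m0 f ⊙ (y0 ⊙ amap x) = amap b ⊙ (m1 w - y1 ⊙ amap x).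
  by lin (congrD (yE |> amap x) (congrN (mcomm w))).
have [_ UQ _] := PBQ; have [z [z1 z2]] := UQ _ _ _ Ez.
have vc : amap a ⊙ (ti ⊙ z) = y0 ⊙ amap x.
  by rewrite -ht1 -(compA q1) (compA t) tti comp1m z1.
exists (@Mor _ x a _ _ vc), (- y1); split => /=; last by lin yE.
have : q2 ⊙ t ⊙ ti ⊙ z = m1 w - y1 ⊙ amap x by rewrite -(compA q2) tti compm1 z2.
by rewrite ht2 => H; lin H.
Qed.

(* C1 is a retract of A0 b. *)
Lemma fully_cofaithful_pushout_retract (a b : arr) (f : mor a b) : inC b -> cofullM f ->
  forall (C1 : A) (inc1 : hom (A0 a) C1) (inc2 : hom (A1 b) C1),
  is_pushout (amap a) (m1 f) inc1 inc2 ->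
  exists al : hom (A0 b) C1, [/\ al ⊙ m0 f = inc1, al ⊙ amap b = inc2 & projective C1].
Proof.
move=> Ib Fu C1 inc1 inc2 PO; have [CP _ MP] := PO.
have vc : amap (arr_zo C1) ⊙ inc2 = (0 : hom (A0 b) zo) ⊙ amap b by apply: hom_to_zo_eq.
pose v := @Mor _ b (arr_zo C1) _ _ vc.
have Hc : is2cell (compM v f) (compM (zeroM b (arr_zo C1)) f) inc1.
  by split => /=; [rewrite comp0m subr0 CP | apply: hom_to_zo_eq].
have [al [[H1 _] alf]] := Fu _ (@inC_arr_zo C1) _ _ _ Hc.
have alb : al ⊙ amap b = inc2 by move: H1 => /=; rewrite subr0.
have [cc [hc1 hc2]] := pushout_to_A0 PO.
have alcc : al ⊙ cc = idm C1 by apply: MP; rewrite -compA ?hc1 ?hc2 comp1m.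
by exists al; split => //; apply: retract_projective alcc Ib.
Qed.

Lemma fully_cofaithful_coroot_of_pip (a b : arr) (f : mor a b) : inC b ->
  fully_cofaithfulM f ->
  forall p (pi : hom (A0 p) (A1 a)), inC p -> is_pip f pi -> is_coroot pi f.
Proof.
move=> Ib [Ff Fu] p pi Ip [Zp fp PPu].
split => // x Ix; split.
- by move=> v v' ga ga' H1 H2 E; apply: (Ff _ Ix _ _ _ _ H1 H2 E).
- by move=> v v' be Hbe; apply: (Fu _ Ix _ _ _ Hbe).
move=> w wp.
(* compare pi with the explicit pip to see that m1 w kills the joint kernel
   of (amap a, m1 f) *)
have [K [kK [mK aK fK UK]]] := joint_kernel HA (amap a) (m1 f).
have [P [e [pP ee]]] := HP K.
have [P1 [pk kpk]] := kernel_exists HA e.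
have [Zs fs _] := pipArr_pip mK aK fK UK ee kpk.
have [_ _ PP3] := PPu (pipArr pk) pP.
have [v0' v0E] := PP3 _ Zs fs.
have wK : m1 w ⊙ kK = 0.
  apply: (epi_comp_eq0 ee); rewrite -compA.
  by move: v0E; rewrite /pip_cell => <-; rewrite compA wp comp0m.
have Hw S (t : hom S (A1 a)) : amap a ⊙ t = 0 -> m1 f ⊙ t = 0 -> m1 w ⊙ t = 0.
  by move=> at0 ft0; have [t' <-] := UK _ _ at0 ft0; rewrite compA wK comp0m.
have [C1 [inc1 [inc2 PO]]] := pushout_exists HA (amap a) (m1 f).
have [al [alf alb pC1]] := fully_cofaithful_pushout_retract Ib Fu PO.
have [u [v uvE]] := projective_pushout_split HA PO pC1 Hw.
have EG : (m0 w - amap x ⊙ u) ⊙ amap a = (amap x ⊙ v) ⊙ m1 f.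
  by lin (congrD (congrN (mcomm w)) (congrN (amap x <| uvE))).
have [_ UP _] := PO; have [G [G1 G2]] := UP _ _ _ EG.
have vc : amap x ⊙ v = (G ⊙ al) ⊙ amap b by rewrite -compA alb G2.
exists (@Mor _ b x _ _ vc), (- u); split => /=; first by lin uvE.
by rewrite -compA alf G1; comp_solve.
Qed.

Lemma arr_two_Puppe_exact : two_Puppe_exact A.
Proof.
split.
- move=> a b f Ia Ib Ff c q ze Ic CK.
  have [C1 [inc1 [inc2 PO]]] := pushout_exists HA (amap a) (m1 f).
  have [cc [hc1 hc2]] := pushout_to_A0 PO.
  exact: (two_kernel_transfer Ff (cs := cokerArr cc) Ib (cokerArr_2cokernel PO hc1 hc2)
           (cokerArr_2kernel Ff PO hc1 hc2) Ic CK).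
- move=> a b f Ia Ib Fc k u ka Ik KK.
  have [Q [q1 [q2 PBQ]]] := pullback_exists HA (m0 f) (amap b).
  have [P [e [pP ee]]] := HP Q.
  have [t [ht1 ht2]] := pullback_from_A1 PBQ.
  have [K1 [r1 [r2 PBK]]] := pullback_exists HA e t.
  exact: (two_cokernel_transfer Fc (ks := kerArr r1) pP (kerArr_2kernel PBQ ee ht1 ht2 PBK)
           (kerArr_2cokernel Ib Fc PBQ ee ht1 ht2 PBK) Ik KK).
- by move=> a b f Ia Ib; apply: fully_faithful_root_of_copip.
- by move=> a b f Ia Ib; apply: fully_cofaithful_coroot_of_pip.
Qed.

End TwoCategory.

Theorem theorem3p1 (A : PreAdditive) :
  abelian A -> enough_projectives A ->
  [/\ two_abelian A, discrete_coker_equivalence A & codiscrete_ker_equivalence A].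
Proof.
move=> HA HP; split; last 2 first.
- exact: discrete_coker_equiv.
- exact: codiscrete_ker_equiv.
split.
- exact: arr_two_additive.
- by split; [exact: arr_has_2kernels | exact: arr_has_2cokernels].
- by split; [exact: arr_has_pips | exact: arr_has_copips].
- by split; [exact: arr_has_roots | exact: arr_has_coroots].
- exact: arr_two_Puppe_exact.
Qed.
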